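(* For every base $B$, term $\mathtt M$ and type $\kappa$ of qPCF: if $B\vdash\mathtt M:\kappa$ is derivable, then $\mathrm{Comp}(B,\mathtt M,\kappa)$ holds.
   Context: qPCF. Gates: $\mathcal U=\bigcup_k\mathcal U(k)$, $\mathtt U\in\mathcal U(k)$ acts on $k+1$ qubits and denotes a unitary $\mathbf U$; $\ddagger$ is a fixed total arity-preserving map on gate names. Raw terms: $\mathtt{M},\mathtt{N},\mathtt{P},\mathtt{Q},\mathtt{E}::=\mathtt{x}\mid\lambda\mathtt{x}^\sigma.\mathtt{M}\mid\mathtt{M}\mathtt{N}\mid\underline{n}\mid\mathtt{pred}\mid\mathtt{succ}\mid\mathtt{if}\mid\mathtt{Y}_\sigma\mid\mathtt{set}\mid\mathtt{get}\mid\mathtt{U}\mid{::}\mid{\parallel}\mid\mathtt{iter}\mid\mathtt{reverse}\mid\odot\mathtt{E}\mathtt{E}'\ (\odot\in\{+,*\})\mid\mathtt{size}\mid\mathtt{dMeas}$, with infix $::$, $\parallel$, $+$. Types $\sigma::=\mathsf{Nat}\mid\mathsf{Idx}\mid\mathsf{Circ}(\mathtt E)\mid\Pi\mathtt x^\sigma.\tau$; $\sigma\to\tau$ is a non-dependent $\Pi$. Bases $B$: finite variable-to-type assignments with distinct variables; $B\cup\{\mathtt x:\sigma\}$ presupposes $\mathtt x\notin\mathrm{dom}(B)$; substitution on a base acts on its types. $\mathrm{sC}(B,\mathsf{Nat})=\mathrm{sC}(B,\mathsf{Idx})=\emptyset$, $\mathrm{sC}(B,\mathsf{Circ}(\mathtt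 E))=\{B\vdash\mathtt E:\mathsf{Idx}\}$, $\mathrm{sC}(B,\Pi\mathtt x^\sigma.\tau)=\mathrm{sC}(B,\sigma)\cup\mathrm{sC}(B\cup\{\mathtt x:\sigma\},\tau)$, extended to sets by union; $\mathrm{WF}(B,S)$ means all typings in $\mathrm{sC}(B,S)$ are derivable. Typing rules: (P0) $\mathrm{WF}(B,\mathrm{codom}(B)\cup\{\sigma\})\Rightarrow B\cup\{\mathtt x:\sigma\}\vdash\mathtt x:\sigma$; (P1) $B\cup\{\mathtt x:\sigma\}\vdash\mathtt N:\tau\Rightarrow B\vdash\lambda\mathtt x^\sigma.\mathtt N:\Pi\mathtt x^\sigma.\tau$; (P2) $B\vdash\mathtt P:\Pi\mathtt x^\sigma.\tau$, $B\vdash\mathtt Q:\sigma\Rightarrow B\vdash\mathtt{PQ}:\tau[\mathtt Q/\mathtt x]$; given $\mathrm{WF}(B,\mathrm{codom}(B))$: $\mathtt{succ},\mathtt{pred}:\mathsf{Nat}\to\mathsf{Nat}$, $\mathtt{if}:\mathsf{Nat}\to\mathsf{Nat}\to\mathsf{Nat}\to\mathsf{Nat}$, $\mathtt{get},\mathtt{set}:\mathsf{Nat}\to\mathsf{Nat}\to\mathsf{Nat}$, $\underline n:\mathsf{Idx}$, $\mathtt U:\mathsf{Circ}(\underline k)$ for $\mathtt U\in\mathcal U(k)$; (P5') $B\vdash\mathtt E:\mathsf{Idx}\Rightarrow B\vdash\mathtt{if}:\mathsf{Nat}\to\mathsf{Circ}(\mathtt E)\to\mathsf{Circ}(\mathtt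 E)\to\mathsf{Circ}(\mathtt E)$; (P6) $\sigma=\tau_1\to\cdots\to\tau_n\to\gamma$, $\gamma\in\{\mathsf{Nat},\mathsf{Circ}(\mathtt E)\}$, $\mathrm{WF}(B,\mathrm{codom}(B)\cup\{\sigma\})\Rightarrow B\vdash\mathtt Y_\sigma:(\sigma\to\sigma)\to\sigma$; (I0) $B\vdash\mathtt M:\mathsf{Idx}\Rightarrow B\vdash\mathtt M:\mathsf{Nat}$; (I2) $B\vdash\mathtt E_0,\mathtt E_1:\mathsf{Idx}\Rightarrow B\vdash\odot\mathtt E_0\mathtt E_1:\mathsf{Idx}$; (I3) $B\vdash\mathtt M:\mathsf{Circ}(\mathtt E)\Rightarrow B\vdash\mathtt{size}\,\mathtt M:\mathsf{Idx}$; given $B\vdash\mathtt E,\mathtt E_0,\mathtt E_1:\mathsf{Idx}$: ${::}:\mathsf{Circ}(\mathtt E)\to\mathsf{Circ}(\mathtt E)\to\mathsf{Circ}(\mathtt E)$, ${\parallel}:\mathsf{Circ}(\mathtt E_0)\to\mathsf{Circ}(\mathtt E_1)\to\mathsf{Circ}(\mathtt E_0+\mathtt E_1+\underline1)$, $\mathtt{reverse}:\mathsf{Circ}(\mathtt E)\to\mathsf{Circ}(\mathtt E)$, $\mathtt{iter}:\Pi\mathtt x^{\mathsf{Idx}}.\mathsf{Circ}(\mathtt E_0)\to\mathsf{Circ}(\mathtt E_1)\to\mathsf{Circ}(\mathtt E_0+((\underline1+\mathtt E_1)*\mathtt x))$, $\mathtt{dMeas}:\mathsf{Nat}\to\mathsf{Circ}(\mathtt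 E)\to\mathsf{Nat}$. Types are identified modulo $\alpha$, $\beta$-convertibility of terms in types, and ring laws of $+,*$ with $0,1$. Evaluation $\mathtt M\Downarrow^\alpha\mathtt V$ ($\mathtt M$ closed of ground type, $0<\alpha\le1$, $\mathtt V$ a numeral or a term built from gate names with $::,\parallel$) is the big-step call-by-name relation: $\underline n\Downarrow^1\underline n$; $\mathtt{succ}$/$\mathtt{pred}$ evaluate their argument and add/subtract one; $(\lambda\mathtt x.\mathtt M)\mathtt N\vec{\mathtt P}\Downarrow^\alpha\mathtt V$ if $\mathtt M[\mathtt N/\mathtt x]\vec{\mathtt P}\Downarrow^\alpha\mathtt V$; $\mathtt{if}\,\mathtt M\mathtt L\mathtt R\Downarrow^{\alpha\alpha'}\mathtt V$ if $\mathtt M\Downarrow^\alpha\underline0,\mathtt L\Downarrow^{\alpha'}\mathtt V$ or $\mathtt M\Downarrow^\alpha\underline{n+1},\mathtt R\Downarrow^{\alpha'}\mathtt V$; $\mathtt Y\mathtt M\vec{\mathtt P}\Downarrow^\alpha\mathtt V$ if $\mathtt M(\mathtt Y\mathtt M)\vec{\mathtt P}\Downarrow^\alpha\mathtt V$; $\mathtt{size}\,\mathtt M\Downarrow^\alpha\underline n$ if $\vdash\mathtt M:\mathsf{Circ}(\mathtt E)$ and $\mathtt E\Downarrow^\alpha\underline n$; $\odot\mathtt E_0\mathtt E_1\Downarrow^{\alpha\alpha'}\underline{m\odot n}$ if $\mathtt E_0\Downarrow^\alpha\underline m,\mathtt E_1\Downarrow^{\alpha'}\underline n$; $\mathtt{get}\,\mathtt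 M\mathtt N$ / $\mathtt{set}\,\mathtt M\mathtt N$ evaluate both arguments to $\underline m,\underline n$ (probabilities multiplied) and return the $n$-th binary digit of $m$ / $m$ with that digit set to $1$; $\mathtt U\Downarrow^\alpha\mathtt U$; $::$, $\parallel$ evaluate components ($\mathtt M_0\parallel\mathtt M_1\Downarrow\mathtt C_1\parallel\mathtt C_0$); $\mathtt{reverse}$ replaces gates by their $\ddagger$-image and reverses sequential order; $\mathtt{iter}\,\mathtt E\mathtt M_0\mathtt M_1\Downarrow\mathtt C_1\parallel\cdots\parallel\mathtt C_1\parallel\mathtt C_0$ ($n$ copies, $\mathtt E\Downarrow\underline n$); $\mathtt{dMeas}\,\mathtt M\mathtt N\Downarrow^{\alpha\alpha'\alpha''}\underline n$ if $\mathtt M\Downarrow^\alpha\underline m$, $\mathtt N\Downarrow^{\alpha'}\mathtt C$, $\vdash\mathtt N:\mathsf{Circ}(\underline k)$ and $\underline n$ is a measurement outcome of the circuit $\mathtt C$ on input $m$ with probability $\alpha''$. Definition of Comp: $\mathrm{Comp}(B,\mathtt M,\sigma)$ holds iff $B\vdash\mathtt M:\sigma$ is derivable and one of: (i) $B=\emptyset$, $\sigma=\mathsf{Nat}$; (ii) $B=\emptyset$, $\sigma=\mathsf{Idx}$ and $\mathtt M\Downarrow^1\underline n$ for some $n$; (iii) $B=\emptyset$, $\sigma=\mathsf{Circ}(\mathtt E)$ and $\mathrm{Comp}(\emptyset,\mathtt E,\mathsf{Idx})$; (iv) $B=\emptyset$, $\sigma=\Pi\mathtt x^\mu.\tau$ and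 $\mathrm{Comp}(\emptyset,\mathtt{MN},\tau[\mathtt N/\mathtt x])$ for all $\mathtt N$ with $\mathrm{Comp}(\emptyset,\mathtt N,\mu)$; (v) $B=\{\mathtt x:\nu\}\cup B'$ and $\mathrm{Comp}(B'[\mathtt N/\mathtt x],\mathtt M[\mathtt N/\mathtt x],\sigma[\mathtt N/\mathtt x])$ for all $\mathtt N$ with $\mathrm{Comp}(\emptyset,\mathtt N,\nu)$. *)

From Stdlib Require Import Reals List Arith.
Import ListNotations.

(* Variables are de Bruijn indices; bound variables: lambda, Pi.        *)
Inductive tm (G : Type) : Type :=
| tVar  : nat -> tm G
| tLam  : ty G -> tm G -> tm G
| tApp  : tm G -> tm G -> tm G
| tNum  : nat -> tm G
| tPred : tm G
| tSucc : tm G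
| tIf   : tm G
| tY    : ty G -> tm G
| tSet  : tm G
| tGet  : tm G
| tGate : G -> tm G
| tCons : tm G
| tPar  : tm G
| tIter : tm G
| tRev  : tm G
| tPlus : tm G -> tm G -> tm G
| tMult : tm G -> tm G -> tm G
| tSize : tm G
| tDMeas : tm G
with ty (G : Type) : Type :=
| TNat  : ty G
| TIdx  : ty G
| TCirc : tm G -> ty G
| TPi   : ty G -> ty G -> ty G.

Arguments tVar {G}. Arguments tLam {G}. Arguments tApp {G}. Arguments tNum {G}.
Arguments tPred {G}. Arguments tSucc {G}. Arguments tIf {G}. Arguments tY {G}.
Arguments tSet {G}. Arguments tGet {G}. Arguments tGate {G}. Arguments tCons {G}.
Arguments tPar {G}. Arguments tIter {G}. Arguments tRev {G}. Arguments tPlus {G}.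
Arguments tMult {G}. Arguments tSize {G}. Arguments tDMeas {G}.
Arguments TNat {G}. Arguments TIdx {G}. Arguments TCirc {G}. Arguments TPi {G}.

Section QPCF.

Variable G : Type.

Fixpoint lift_tm (d c : nat) (t : tm G) {struct t} : tm G :=
  match t with
  | tVar k => if c <=? k then tVar (k + d) else tVar k
  | tLam s M => tLam (lift_ty d c s) (lift_tm d (S c) M)
  | tApp M N => tApp (lift_tm d c M) (lift_tm d c N)
  | tY s => tY (lift_ty d c s)
  | tPlus a b => tPlus (lift_tm d c a) (lift_tm d c b)
  | tMult a b => tMult (lift_tm d c a) (lift_tm d c b)
  | t => t
  end
with lift_ty (d c : nat) (s : ty G) {struct s} : ty G :=
  match s with
  | TCirc E => TCirc (lift_tm d c E)
  | TPi a b => TPi (lift_ty d c a) (lift_ty d (S c) b)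
  | s => s
  end.

Fixpoint subst_tm (j : nat) (N : tm G) (t : tm G) {struct t} : tm G :=
  match t with
  | tVar k => if k <? j then tVar k
              else if k =? j then lift_tm j 0 N else tVar (k - 1)
  | tLam s M => tLam (subst_ty j N s) (subst_tm (S j) N M)
  | tApp M P => tApp (subst_tm j N M) (subst_tm j N P)
  | tY s => tY (subst_ty j N s)
  | tPlus a b => tPlus (subst_tm j N a) (subst_tm j N b)
  | tMult a b => tMult (subst_tm j N a) (subst_tm j N b)
  | t => t
  end
with subst_ty (j : nat) (N : tm G) (s : ty G) {struct s} : ty G :=
  match s with
  | TCirc E => TCirc (subst_tm j N E)
  | TPi a b => TPi (subst_ty j N a) (subst_ty (S j) N b)
  | s => s
  end.

Definition arrow (s t : ty G) : ty G := TPi s (lift_ty 1 0 t).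

Inductive tmconv : tm G -> tm G -> Prop :=
| cv_refl : forall t, tmconv t t
| cv_sym : forall t u, tmconv t u -> tmconv u t
| cv_trans : forall t u v, tmconv t u -> tmconv u v -> tmconv t v
| cv_lam : forall s s' M M', tyconv s s' -> tmconv M M' -> tmconv (tLam s M) (tLam s' M')
| cv_app : forall M M' N N', tmconv M M' -> tmconv N N' -> tmconv (tApp M N) (tApp M' N')
| cv_Y : forall s s', tyconv s s' -> tmconv (tY s) (tY s')
| cv_plus : forall a a' b b', tmconv a a' -> tmconv b b' -> tmconv (tPlus a b) (tPlus a' b')
| cv_mult : forall a a' b b', tmconv a a' -> tmconv b b' -> tmconv (tMult a b) (tMult a' b')
| cv_beta : forall s M N, tmconv (tApp (tLam s M) N) (subst_tm 0 N M)
| cv_plusC : forall a b, tmconv (tPlus a b) (tPlus b a)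
| cv_plusA : forall a b c, tmconv (tPlus a (tPlus b c)) (tPlus (tPlus a b) c)
| cv_plus0 : forall a, tmconv (tPlus (tNum 0) a) a
| cv_multC : forall a b, tmconv (tMult a b) (tMult b a)
| cv_multA : forall a b c, tmconv (tMult a (tMult b c)) (tMult (tMult a b) c)
| cv_mult1 : forall a, tmconv (tMult (tNum 1) a) a
| cv_mult0 : forall a, tmconv (tMult (tNum 0) a) (tNum 0)
| cv_distr : forall a b c, tmconv (tMult a (tPlus b c)) (tPlus (tMult a b) (tMult a c))
| cv_num_plus : forall m n, tmconv (tPlus (tNum m) (tNum n)) (tNum (m + n))
| cv_num_mult : forall m n, tmconv (tMult (tNum m) (tNum n)) (tNum (m * n))
with tyconv : ty G -> ty G -> Prop :=
| cvt_refl : forall s, tyconv s s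
| cvt_sym : forall s t, tyconv s t -> tyconv t s
| cvt_trans : forall s t u, tyconv s t -> tyconv t u -> tyconv s u
| cvt_circ : forall E E', tmconv E E' -> tyconv (TCirc E) (TCirc E')
| cvt_pi : forall a a' b b', tyconv a a' -> tyconv b b' -> tyconv (TPi a b) (TPi a' b').

(* Bases.  A base is a list of types, one per variable; index i is the  *)
(* variable i, and every type in the list is written in the scope of    *)
(* the whole base (bases are unordered sets in the paper).              *)
(* [ins i s B] is  B ∪ {x:s}  with the fresh variable x at position i.  *)
Definition ins (i : nat) (s : ty G) (B : list (ty G)) : list (ty G) :=
  map (lift_ty 1 i) (firstn i B ++ s :: skipn i B).

Definition ext (B : list (ty G)) (s : ty G) : list (ty G) := ins 0 s B.

Inductive yshape : ty G -> Prop :=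
| ys_nat : yshape TNat
| ys_circ : forall E, yshape (TCirc E)
| ys_arrow : forall t r, yshape r -> yshape (arrow t r).

Variable arity : G -> nat.

(* typing  B |- M : sigma,  and well-formedness  wf B sigma  ( = WF(B,{sigma}) ,
   i.e. all typings in sC(B, sigma) are derivable) *)
Inductive typ : list (ty G) -> tm G -> ty G -> Prop :=
| T_var : forall B i s, i <= length B ->
    (forall t, In t B -> wf B t) -> wf B s ->
    typ (ins i s B) (tVar i) (lift_ty 1 i s)
| T_lam : forall B s N t, typ (ext B s) N t -> typ B (tLam s N) (TPi s t)
| T_app : forall B P Q s t, typ B P (TPi s t) -> typ B Q s ->
    typ B (tApp P Q) (subst_ty 0 Q t)
| T_succ : forall B, (forall t, In t B -> wf B t) -> typ B tSucc (arrow TNat TNat)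
| T_pred : forall B, (forall t, In t B -> wf B t) -> typ B tPred (arrow TNat TNat)
| T_if : forall B, (forall t, In t B -> wf B t) ->
    typ B tIf (arrow TNat (arrow TNat (arrow TNat TNat)))
| T_get : forall B, (forall t, In t B -> wf B t) ->
    typ B tGet (arrow TNat (arrow TNat TNat))
| T_set : forall B, (forall t, In t B -> wf B t) ->
    typ B tSet (arrow TNat (arrow TNat TNat))
| T_num : forall B n, (forall t, In t B -> wf B t) -> typ B (tNum n) TIdx
| T_gate : forall B g, (forall t, In t B -> wf B t) ->
    typ B (tGate g) (TCirc (tNum (arity g)))
| T_ifc : forall B E, typ B E TIdx ->
    typ B tIf (arrow TNat (arrow (TCirc E) (arrow (TCirc E) (TCirc E))))
| T_Y : forall B s s', (forall t, In t B -> wf B t) -> wf B s ->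
    tyconv s s' -> yshape s' ->
    typ B (tY s) (arrow (arrow s s) s)
| T_idx : forall B M, typ B M TIdx -> typ B M TNat
| T_plus : forall B a b, typ B a TIdx -> typ B b TIdx -> typ B (tPlus a b) TIdx
| T_mult : forall B a b, typ B a TIdx -> typ B b TIdx -> typ B (tMult a b) TIdx
| T_size : forall B M E, typ B M (TCirc E) -> typ B (tApp tSize M) TIdx
| T_cons : forall B E, typ B E TIdx ->
    typ B tCons (arrow (TCirc E) (arrow (TCirc E) (TCirc E)))
| T_par : forall B E0 E1, typ B E0 TIdx -> typ B E1 TIdx ->
    typ B tPar (arrow (TCirc E0) (arrow (TCirc E1)
                  (TCirc (tPlus (tPlus E0 E1) (tNum 1)))))
| T_rev : forall B E, typ B E TIdx -> typ B tRev (arrow (TCirc E) (TCirc E))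
| T_iter : forall B E0 E1, typ B E0 TIdx -> typ B E1 TIdx ->
    typ B tIter
      (TPi TIdx (arrow (TCirc (lift_tm 1 0 E0))
                   (arrow (TCirc (lift_tm 1 0 E1))
                      (TCirc (tPlus (lift_tm 1 0 E0)
                                (tMult (tPlus (tNum 1) (lift_tm 1 0 E1)) (tVar 0)))))))
| T_dmeas : forall B E, typ B E TIdx ->
    typ B tDMeas (arrow TNat (arrow (TCirc E) TNat))
| T_conv : forall B M s t, typ B M s -> tyconv s t -> wf B t -> typ B M t
with wf : list (ty G) -> ty G -> Prop :=
| wf_nat : forall B, wf B TNat
| wf_idx : forall B, wf B TIdx
| wf_circ : forall B E, typ B E TIdx -> wf B (TCirc E)
| wf_pi : forall B s t, wf B s -> wf (ext B s) t -> wf B (TPi s t).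

Variable dagger : G -> G.
Variable meas : tm G -> nat -> nat -> nat -> R.
(* meas C k m n : probability that n is the measurement outcome of the
   circuit value C : Circ(k) on input m *)

Definition apps (M : tm G) (Ps : list (tm G)) : tm G := fold_left (@tApp G) Ps M.

Fixpoint crev (C : tm G) : tm G :=
  match C with
  | tGate g => tGate (dagger g)
  | tApp (tApp tCons C0) C1 => tApp (tApp tCons (crev C1)) (crev C0)
  | tApp (tApp tPar C0) C1 => tApp (tApp tPar (crev C0)) (crev C1)
  | C => C
  end.

Fixpoint iterc (n : nat) (C1 C0 : tm G) : tm G :=
  match n with
  | 0 => C0
  | S n => tApp (tApp tPar C1) (iterc n C1 C0)
  end.

Inductive eval : tm G -> R -> tm G -> Prop :=
| E_num : forall n, eval (tNum n) 1%R (tNum n)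
| E_succ : forall M a n, eval M a (tNum n) -> eval (tApp tSucc M) a (tNum (S n))
| E_pred : forall M a n, eval M a (tNum n) -> eval (tApp tPred M) a (tNum (Nat.pred n))
| E_beta : forall s M N Ps a V,
    eval (apps (subst_tm 0 N M) Ps) a V -> eval (apps (tApp (tLam s M) N) Ps) a V
| E_if0 : forall M L Rt a a' V, eval M a (tNum 0) -> eval L a' V ->
    eval (tApp (tApp (tApp tIf M) L) Rt) (a * a')%R V
| E_ifS : forall M L Rt n a a' V, eval M a (tNum (S n)) -> eval Rt a' V ->
    eval (tApp (tApp (tApp tIf M) L) Rt) (a * a')%R V
| E_Y : forall s M Ps a V,
    eval (apps (tApp M (tApp (tY s) M)) Ps) a V -> eval (apps (tApp (tY s) M) Ps) a V
| E_size : forall M E a n, typ [] M (TCirc E) -> eval E a (tNum n) ->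
    eval (tApp tSize M) a (tNum n)
| E_plus : forall E0 E1 a a' m n, eval E0 a (tNum m) -> eval E1 a' (tNum n) ->
    eval (tPlus E0 E1) (a * a')%R (tNum (m + n))
| E_mult : forall E0 E1 a a' m n, eval E0 a (tNum m) -> eval E1 a' (tNum n) ->
    eval (tMult E0 E1) (a * a')%R (tNum (m * n))
| E_get : forall M N a a' m n, eval M a (tNum m) -> eval N a' (tNum n) ->
    eval (tApp (tApp tGet M) N) (a * a')%R (tNum (if Nat.testbit m n then 1 else 0))
| E_set : forall M N a a' m n, eval M a (tNum m) -> eval N a' (tNum n) ->
    eval (tApp (tApp tSet M) N) (a * a')%R (tNum (Nat.setbit m n))
| E_gate : forall g, eval (tGate g) 1%R (tGate g)
| E_cons : forall M0 M1 a a' C0 C1, eval M0 a C0 -> eval M1 a' C1 ->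
    eval (tApp (tApp tCons M0) M1) (a * a')%R (tApp (tApp tCons C0) C1)
| E_par : forall M0 M1 a a' C0 C1, eval M0 a C0 -> eval M1 a' C1 ->
    eval (tApp (tApp tPar M0) M1) (a * a')%R (tApp (tApp tPar C1) C0)
| E_rev : forall M a C, eval M a C -> eval (tApp tRev M) a (crev C)
| E_iter : forall E M0 M1 a a' a'' n C0 C1,
    eval E a (tNum n) -> eval M0 a' C0 -> eval M1 a'' C1 ->
    eval (tApp (tApp (tApp tIter E) M0) M1) (a * a' * a'')%R (iterc n C1 C0)
| E_dmeas : forall M N a a' p m k n C,
    eval M a (tNum m) -> eval N a' C -> typ [] N (TCirc (tNum k)) ->
    (0 < p)%R -> meas C k m n = p ->
    eval (tApp (tApp tDMeas M) N) (a * a' * p)%R (tNum n).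

(* size of a type (number of Pi-nestings, Circ counts 2); invariant
   under substitution, used as fuel for the closed case *)
Fixpoint tsize (s : ty G) : nat :=
  match s with
  | TNat => 1
  | TIdx => 1
  | TCirc _ => 2
  | TPi a b => S (Nat.max (tsize a) (tsize b))
  end.

(* clauses (i)-(iv): Comp(∅, M, sigma) *)
Fixpoint compc (f : nat) (s : ty G) (M : tm G) {struct f} : Prop :=
  match f with
  | 0 => False
  | S f =>
    typ [] M s /\
    match s with
    | TNat => True
    | TIdx => exists n, eval M 1%R (tNum n)
    | TCirc E => compc f TIdx E
    | TPi mu t => forall N, compc f mu N -> compc f (subst_ty 0 N t) (tApp M N)
    end
  end.

Definition CompClosed (s : ty G) (M : tm G) : Prop := compc (tsize s) s M.

Definition remove_at (i : nat) (B : list (ty G)) : list (ty G) :=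
  firstn i B ++ skipn (S i) B.

(* clause (v): for every x:nu in B (B = {x:nu} ∪ B') and every N with
   Comp(∅,N,nu):  Comp(B'[N/x], M[N/x], sigma[N/x]) *)
Fixpoint comp_aux (k : nat) (B : list (ty G)) (M : tm G) (s : ty G) : Prop :=
  match k with
  | 0 => B = [] /\ CompClosed s M
  | S k =>
    typ B M s /\
    forall i, i < length B -> forall N, CompClosed (nth i B TNat) N ->
      comp_aux k (map (subst_ty i N) (remove_at i B)) (subst_tm i N M) (subst_ty i N s)
  end.

Definition Comp (B : list (ty G)) (M : tm G) (s : ty G) : Prop :=
  comp_aux (length B) B M s.

End QPCF.

(* The proof is a logical-relations argument.  A closed term M is reducible at a closed
   type s when, for s = Idx, M evaluates with probability 1 to a numeral and, for
   s = Pi x^a.b, M A is reducible at b[A/x] for every reducible closed A of a type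
   convertible to a.  A closed type is valid when every Circ(E) reached by instantiating
   its binders with reducible terms has a closed index E of type Idx that evaluates to a
   numeral.  Every derivable B |- M : s is sound: closing it with reducible terms for the
   variables of B yields a reducible term at a valid type.  The abstraction and application
   cases use the substitution lemma for instantiating any set of variables of a base by
   closed terms, whose variable case needs weakening of closed terms into well-formed
   bases.  Comp(B, M, s) then follows by induction on the size of B: clause (v) is the
   substitution lemma, and clauses (i)-(iv) are read off from reducibility and validity. *)

From Stdlib Require Import Reals List Lia.
Import ListNotations.

Scheme tm_ty_ind := Induction for tm Sort Prop
  with ty_tm_ind := Induction for ty Sort Prop.
Combined Scheme tm_ty_mutind from tm_ty_ind, ty_tm_ind.
Scheme typ_wf_ind := Minimality for typ Sort Prop
  with wf_typ_ind := Minimality for wf Sort Prop.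
Combined Scheme typ_wf_mutind from typ_wf_ind, wf_typ_ind.
Scheme tmconv_ind' := Induction for tmconv Sort Prop
  with tyconv_ind' := Induction for tyconv Sort Prop.
Combined Scheme conv_mutind from tmconv_ind', tyconv_ind'.

Section Qpcf.

Variable G : Type.

Local Notation tm := (tm G).
Local Notation ty := (ty G).
Local Notation lift_tm := (lift_tm G).
Local Notation lift_ty := (lift_ty G).
Local Notation subst_tm := (subst_tm G).
Local Notation subst_ty := (subst_ty G).
Local Notation arrow := (arrow G).

(** * Parallel substitution *)

Definition up (f : nat -> tm) (k : nat) : tm :=
  match k with 0 => tVar 0 | S k => lift_tm 1 0 (f k) end.

Fixpoint psubst_tm (f : nat -> tm) (t : tm) : tm :=
  match t with
  | tVar k => f k
  | tLam s M => tLam (psubst_ty f s) (psubst_tm (up f) M)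
  | tApp M N => tApp (psubst_tm f M) (psubst_tm f N)
  | tY s => tY (psubst_ty f s)
  | tPlus a b => tPlus (psubst_tm f a) (psubst_tm f b)
  | tMult a b => tMult (psubst_tm f a) (psubst_tm f b)
  | t => t
  end
with psubst_ty (f : nat -> tm) (s : ty) : ty :=
  match s with
  | TCirc E => TCirc (psubst_tm f E)
  | TPi a b => TPi (psubst_ty f a) (psubst_ty (up f) b)
  | s => s
  end.

Definition ren (r : nat -> nat) (k : nat) : tm := tVar (r k).

Definition up_nat (r : nat -> nat) (k : nat) : nat :=
  match k with 0 => 0 | S k => S (r k) end.

Definition bump (d c k : nat) : nat := if c <=? k then k + d else k.

Definition single_sub (j : nat) (N : tm) (k : nat) : tm :=
  if k <? j then tVar k else if k =? j then lift_tm j 0 N else tVar (k - 1).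

Lemma up_ext f g : (forall k, f k = g k) -> forall k, up f k = up g k.
Proof. intros H [|k]; simpl; now rewrite ?H. Qed.

Lemma psubst_ext_mut :
  (forall t f g, (forall k, f k = g k) -> psubst_tm f t = psubst_tm g t) /\
  (forall s f g, (forall k, f k = g k) -> psubst_ty f s = psubst_ty g s).
Proof. apply tm_ty_mutind; intros; simpl; f_equal; eauto using up_ext. Qed.

Lemma psubst_tm_ext t f g : (forall k, f k = g k) -> psubst_tm f t = psubst_tm g t.
Proof. apply psubst_ext_mut. Qed.

Lemma psubst_ty_ext s f g : (forall k, f k = g k) -> psubst_ty f s = psubst_ty g s.
Proof. apply psubst_ext_mut. Qed.

Lemma up_ren r k : up (ren r) k = ren (up_nat r) k.
Proof. destruct k; unfold ren; simpl; f_equal; lia. Qed.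

Lemma up_bump d c k : up (ren (bump d c)) k = ren (bump d (S c)) k.
Proof.
  destruct k as [|k]; unfold ren, bump; simpl; [reflexivity|].
  destruct (c <=? k); simpl; f_equal; lia.
Qed.

Lemma lift_psubst_mut :
  (forall t d c, lift_tm d c t = psubst_tm (ren (bump d c)) t) /\
  (forall s d c, lift_ty d c s = psubst_ty (ren (bump d c)) s).
Proof.
  apply tm_ty_mutind; intros; simpl; try reflexivity; f_equal; auto.
  - unfold ren, bump. now destruct (c <=? n).
  - rewrite H0. apply psubst_tm_ext. intro k. symmetry. apply up_bump.
  - rewrite H0. apply psubst_ty_ext. intro k. symmetry. apply up_bump.
Qed.

Lemma lift_tm_psubst t d c : lift_tm d c t = psubst_tm (ren (bump d c)) t.
Proof. apply lift_psubst_mut. Qed.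

Lemma lift_ty_psubst s d c : lift_ty d c s = psubst_ty (ren (bump d c)) s.
Proof. apply lift_psubst_mut. Qed.

Lemma psubst_tm_up_ren r t : psubst_tm (up (ren r)) t = psubst_tm (ren (up_nat r)) t.
Proof. apply psubst_tm_ext, up_ren. Qed.

Lemma psubst_ty_up_ren r s : psubst_ty (up (ren r)) s = psubst_ty (ren (up_nat r)) s.
Proof. apply psubst_ty_ext, up_ren. Qed.

Lemma psubst_ren_ren_mut :
  (forall t r1 r2,
     psubst_tm (ren r1) (psubst_tm (ren r2) t) = psubst_tm (ren (fun k => r1 (r2 k))) t) /\
  (forall s r1 r2,
     psubst_ty (ren r1) (psubst_ty (ren r2) s) = psubst_ty (ren (fun k => r1 (r2 k))) s).
Proof.
  apply tm_ty_mutind; intros; simpl; try reflexivity; f_equal; auto;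
    rewrite ?psubst_tm_up_ren, ?psubst_ty_up_ren, H0;
    [apply psubst_tm_ext | apply psubst_ty_ext]; intros [|k]; reflexivity.
Qed.

Lemma psubst_sub_ren_mut :
  (forall t f r, psubst_tm f (psubst_tm (ren r) t) = psubst_tm (fun k => f (r k)) t) /\
  (forall s f r, psubst_ty f (psubst_ty (ren r) s) = psubst_ty (fun k => f (r k)) s).
Proof.
  apply tm_ty_mutind; intros; simpl; try reflexivity; f_equal; auto;
    rewrite ?psubst_tm_up_ren, ?psubst_ty_up_ren, H0;
    [apply psubst_tm_ext | apply psubst_ty_ext]; intros [|k]; reflexivity.
Qed.

Lemma lift1_tm_ren t : lift_tm 1 0 t = psubst_tm (ren S) t.
Proof.
  rewrite lift_tm_psubst. apply psubst_tm_ext. intro k. unfold ren, bump. simpl. f_equal. lia.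
Qed.

Lemma psubst_ren_sub_mut :
  (forall t f r,
     psubst_tm (ren r) (psubst_tm f t) = psubst_tm (fun k => psubst_tm (ren r) (f k)) t) /\
  (forall s f r,
     psubst_ty (ren r) (psubst_ty f s) = psubst_ty (fun k => psubst_tm (ren r) (f k)) s).
Proof.
  apply tm_ty_mutind; intros; simpl; try reflexivity; f_equal; auto;
    rewrite ?psubst_tm_up_ren, ?psubst_ty_up_ren, H0;
    [apply psubst_tm_ext | apply psubst_ty_ext]; intros [|k]; simpl; try reflexivity;
    rewrite !lift1_tm_ren, !(proj1 psubst_ren_ren_mut); reflexivity.
Qed.

Lemma up_comp f g k : psubst_tm (up f) (up g k) = up (fun j => psubst_tm f (g j)) k.
Proof.
  destruct k; simpl; [reflexivity|].
  rewrite !lift1_tm_ren, (proj1 psubst_sub_ren_mut), (proj1 psubst_ren_sub_mut).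
  apply psubst_tm_ext. intro j. simpl. now rewrite lift1_tm_ren.
Qed.

Lemma psubst_comp_mut :
  (forall t f g, psubst_tm f (psubst_tm g t) = psubst_tm (fun k => psubst_tm f (g k)) t) /\
  (forall s f g, psubst_ty f (psubst_ty g s) = psubst_ty (fun k => psubst_tm f (g k)) s).
Proof.
  apply tm_ty_mutind; intros; simpl; try reflexivity; f_equal; auto; rewrite H0;
    [apply psubst_tm_ext | apply psubst_ty_ext]; apply up_comp.
Qed.

Lemma psubst_tm_comp t f g : psubst_tm f (psubst_tm g t) = psubst_tm (fun k => psubst_tm f (g k)) t.
Proof. apply psubst_comp_mut. Qed.

Lemma psubst_ty_comp s f g : psubst_ty f (psubst_ty g s) = psubst_ty (fun k => psubst_tm f (g k)) s.
Proof. apply psubst_comp_mut. Qed.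

Lemma up_var k : up (@tVar G) k = tVar k.
Proof. destruct k; simpl; f_equal; lia. Qed.

Lemma psubst_id_mut :
  (forall t, psubst_tm (@tVar G) t = t) /\ (forall s, psubst_ty (@tVar G) s = s).
Proof.
  apply tm_ty_mutind; intros; simpl; try reflexivity; f_equal; auto; rewrite <- H0 at 2;
    [apply psubst_tm_ext | apply psubst_ty_ext]; apply up_var.
Qed.

Lemma psubst_tm_id t : psubst_tm (@tVar G) t = t.
Proof. apply psubst_id_mut. Qed.

Lemma psubst_ty_id s : psubst_ty (@tVar G) s = s.
Proof. apply psubst_id_mut. Qed.

Lemma up_single_sub j N k : up (single_sub j N) k = single_sub (S j) N k.
Proof.
  destruct k as [|k]; unfold single_sub; simpl; [now destruct j|].
  change (S k <? S j) with (k <? j). change (S k =? S j) with (k =? j).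
  destruct (Nat.ltb_spec k j); simpl; [f_equal; lia|].
  destruct (Nat.eqb_spec k j); simpl; [|f_equal; lia].
  rewrite !lift_tm_psubst, psubst_tm_comp. apply psubst_tm_ext. intro i.
  unfold ren, bump. simpl. f_equal. lia.
Qed.

Lemma subst_psubst_mut :
  (forall t j N, subst_tm j N t = psubst_tm (single_sub j N) t) /\
  (forall s j N, subst_ty j N s = psubst_ty (single_sub j N) s).
Proof.
  apply tm_ty_mutind; intros; simpl; try reflexivity; f_equal; auto; rewrite H0;
    [apply psubst_tm_ext | apply psubst_ty_ext]; intro k; symmetry; apply up_single_sub.
Qed.

Lemma subst_tm_psubst t j N : subst_tm j N t = psubst_tm (single_sub j N) t.
Proof. apply subst_psubst_mut. Qed.

Lemma subst_ty_psubst s j N : subst_ty j N s = psubst_ty (single_sub j N) s.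
Proof. apply subst_psubst_mut. Qed.

Lemma lift1_ty_ren s : lift_ty 1 0 s = psubst_ty (ren S) s.
Proof.
  rewrite lift_ty_psubst. apply psubst_ty_ext. intro k. unfold ren, bump. simpl. f_equal. lia.
Qed.

Lemma psubst_tm_up_lift f t : psubst_tm (up f) (lift_tm 1 0 t) = lift_tm 1 0 (psubst_tm f t).
Proof.
  rewrite !lift1_tm_ren, (proj1 psubst_sub_ren_mut), (proj1 psubst_ren_sub_mut).
  apply psubst_tm_ext. intro k. apply lift1_tm_ren.
Qed.

Lemma psubst_ty_up_lift f s : psubst_ty (up f) (lift_ty 1 0 s) = lift_ty 1 0 (psubst_ty f s).
Proof.
  rewrite !lift1_ty_ren, (proj2 psubst_sub_ren_mut), (proj2 psubst_ren_sub_mut).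
  apply psubst_ty_ext. intro k. apply lift1_tm_ren.
Qed.

Lemma psubst_tm_lift f d c t :
  psubst_tm f (lift_tm d c t) = psubst_tm (fun k => f (bump d c k)) t.
Proof. now rewrite lift_tm_psubst, (proj1 psubst_sub_ren_mut). Qed.

Lemma psubst_ty_lift f d c s :
  psubst_ty f (lift_ty d c s) = psubst_ty (fun k => f (bump d c k)) s.
Proof. now rewrite lift_ty_psubst, (proj2 psubst_sub_ren_mut). Qed.

Lemma single_sub_bump j N k : single_sub j N (bump 1 j k) = tVar k.
Proof.
  unfold single_sub, bump. destruct (Nat.leb_spec j k).
  - destruct (Nat.ltb_spec (k + 1) j); [lia|]. destruct (Nat.eqb_spec (k + 1) j); [lia|].
    f_equal; lia.
  - destruct (Nat.ltb_spec k j); [reflexivity|lia].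
Qed.

Lemma subst_lift_tm j N t : subst_tm j N (lift_tm 1 j t) = t.
Proof.
  rewrite subst_tm_psubst, psubst_tm_lift. rewrite <- (psubst_tm_id t) at 2.
  apply psubst_tm_ext, single_sub_bump.
Qed.

Lemma subst_lift_ty j N s : subst_ty j N (lift_ty 1 j s) = s.
Proof.
  rewrite subst_ty_psubst, psubst_ty_lift. rewrite <- (psubst_ty_id s) at 2.
  apply psubst_ty_ext, single_sub_bump.
Qed.

Lemma lift0_tm c t : lift_tm 0 c t = t.
Proof.
  rewrite lift_tm_psubst. rewrite <- (psubst_tm_id t) at 2. apply psubst_tm_ext. intro k.
  unfold ren, bump. destruct (c <=? k); f_equal; lia.
Qed.

Lemma psubst_single_sub0 f Q k :
  psubst_tm f (single_sub 0 Q k) = psubst_tm (single_sub 0 (psubst_tm f Q)) (up f k).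
Proof.
  destruct k as [|k]; simpl.
  - unfold single_sub; simpl. now rewrite !lift0_tm.
  - rewrite <- subst_tm_psubst, subst_lift_tm. unfold single_sub; simpl. f_equal; lia.
Qed.

Lemma psubst_tm_subst0 f Q t :
  psubst_tm f (subst_tm 0 Q t) = subst_tm 0 (psubst_tm f Q) (psubst_tm (up f) t).
Proof.
  rewrite !subst_tm_psubst, !psubst_tm_comp. apply psubst_tm_ext, psubst_single_sub0.
Qed.

Lemma psubst_ty_subst0 f Q s :
  psubst_ty f (subst_ty 0 Q s) = subst_ty 0 (psubst_tm f Q) (psubst_ty (up f) s).
Proof.
  rewrite !subst_ty_psubst, !psubst_ty_comp. apply psubst_ty_ext, psubst_single_sub0.
Qed.

Lemma psubst_arrow f a b : psubst_ty f (arrow a b) = arrow (psubst_ty f a) (psubst_ty f b).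
Proof. unfold arrow. simpl. now rewrite psubst_ty_up_lift. Qed.

Lemma bump_S c k : bump 1 (S c) (S k) = S (bump 1 c k).
Proof. unfold bump. simpl. now destruct (c <=? k). Qed.

Lemma bump_0 k : bump 1 0 k = S k.
Proof. unfold bump. simpl. lia. Qed.

Lemma lift_lift_tm c t : lift_tm 1 0 (lift_tm 1 c t) = lift_tm 1 (S c) (lift_tm 1 0 t).
Proof.
  rewrite !lift_tm_psubst, !psubst_tm_comp. apply psubst_tm_ext. intro k.
  unfold ren, bump. simpl. replace (k + 1) with (S k) by lia. simpl.
  destruct (c <=? k); f_equal; lia.
Qed.

Fixpoint closed_tm (n : nat) (t : tm) : Prop :=
  match t with
  | tVar k => k < n
  | tLam s M => closed_ty n s /\ closed_tm (S n) M
  | tApp M N => closed_tm n M /\ closed_tm n N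
  | tY s => closed_ty n s
  | tPlus a b => closed_tm n a /\ closed_tm n b
  | tMult a b => closed_tm n a /\ closed_tm n b
  | _ => True
  end
with closed_ty (n : nat) (s : ty) : Prop :=
  match s with
  | TCirc E => closed_tm n E
  | TPi a b => closed_ty n a /\ closed_ty (S n) b
  | _ => True
  end.

Lemma closed_psubst_ext_mut :
  (forall t n f g, closed_tm n t -> (forall k, k < n -> f k = g k) ->
     psubst_tm f t = psubst_tm g t) /\
  (forall s n f g, closed_ty n s -> (forall k, k < n -> f k = g k) ->
     psubst_ty f s = psubst_ty g s).
Proof.
  apply tm_ty_mutind; intros; simpl in *; try tauto; try (f_equal; intuition eauto; fail);
    f_equal; intuition eauto; eapply H0; eauto;
    intros [|k] Hk; simpl; f_equal; auto with arith.
Qed.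

Lemma closed0_psubst_tm f t : closed_tm 0 t -> psubst_tm f t = t.
Proof.
  intro H. rewrite <- (psubst_tm_id t) at 2.
  eapply closed_psubst_ext_mut; eauto. intros; lia.
Qed.

Lemma closed0_psubst_ty f s : closed_ty 0 s -> psubst_ty f s = s.
Proof.
  intro H. rewrite <- (psubst_ty_id s) at 2.
  eapply closed_psubst_ext_mut; eauto. intros; lia.
Qed.

Lemma closed0_lift_tm d c t : closed_tm 0 t -> lift_tm d c t = t.
Proof. intro H. rewrite lift_tm_psubst. now apply closed0_psubst_tm. Qed.

Lemma closed_ren_mut :
  (forall t n m r, closed_tm n t -> (forall k, k < n -> r k < m) ->
     closed_tm m (psubst_tm (ren r) t)) /\
  (forall s n m r, closed_ty n s -> (forall k, k < n -> r k < m) ->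
     closed_ty m (psubst_ty (ren r) s)).
Proof.
  apply tm_ty_mutind; intros; simpl in *; rewrite ?psubst_tm_up_ren, ?psubst_ty_up_ren;
    intuition eauto; eapply H0; eauto; intros [|k] Hk; simpl; auto with arith.
Qed.

Lemma closed_psubst_mut :
  (forall t n m f, closed_tm n t -> (forall k, k < n -> closed_tm m (f k)) ->
     closed_tm m (psubst_tm f t)) /\
  (forall s n m f, closed_ty n s -> (forall k, k < n -> closed_tm m (f k)) ->
     closed_ty m (psubst_ty f s)).
Proof.
  assert (Hup : forall n m f, (forall k, k < n -> closed_tm m (f k)) ->
                 forall k, k < S n -> closed_tm (S m) (up f k)).
  { intros n m f H [|k] Hk; simpl; [lia|].
    rewrite lift1_tm_ren. eapply closed_ren_mut; [apply H; lia | intros; lia]. }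
  apply tm_ty_mutind; intros; simpl in *; intuition eauto.
Qed.

Lemma closed_lift_tm n c t : closed_tm n t -> closed_tm (S n) (lift_tm 1 c t).
Proof.
  intro H. rewrite lift_tm_psubst. eapply closed_psubst_mut; eauto.
  intros k Hk. unfold ren, bump. simpl. destruct (c <=? k); lia.
Qed.

Lemma closed_lift_ty n c s : closed_ty n s -> closed_ty (S n) (lift_ty 1 c s).
Proof.
  intro H. rewrite lift_ty_psubst. eapply closed_psubst_mut; eauto.
  intros k Hk. unfold ren, bump. simpl. destruct (c <=? k); lia.
Qed.

Lemma closed_subst0_ty n N s : closed_tm n N -> closed_ty (S n) s -> closed_ty n (subst_ty 0 N s).
Proof.
  intros HN Hs. rewrite subst_ty_psubst. eapply closed_psubst_mut; eauto.
  intros [|k] Hk; unfold single_sub; simpl; [now rewrite lift0_tm | lia].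
Qed.

Lemma closed_unlift_ty n s : closed_ty (S n) (lift_ty 1 0 s) -> closed_ty n s.
Proof.
  intro H. rewrite <- (subst_lift_ty 0 (tNum 0) s). now apply closed_subst0_ty.
Qed.

Lemma closed_arrow n a b : closed_ty n a -> closed_ty n b -> closed_ty n (arrow a b).
Proof. intros Ha Hb. split; auto. now apply closed_lift_ty. Qed.

Lemma conv_psubst_mut :
  (forall t u, tmconv G t u -> forall f, tmconv G (psubst_tm f t) (psubst_tm f u)) /\
  (forall s u, tyconv G s u -> forall f, tyconv G (psubst_ty f s) (psubst_ty f u)).
Proof.
  apply conv_mutind; intros; simpl; try (econstructor; eauto; fail).
  rewrite psubst_tm_subst0. apply cv_beta.
Qed.

Lemma tyconv_psubst f s u : tyconv G s u -> tyconv G (psubst_ty f s) (psubst_ty f u).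
Proof. intro H. now apply conv_psubst_mut. Qed.

Definition same_head (s u : ty) : Prop :=
  match s, u with
  | TNat, TNat | TIdx, TIdx => True
  | TCirc E, TCirc E' => tmconv G E E'
  | TPi a b, TPi a' b' => tyconv G a a' /\ tyconv G b b'
  | _, _ => False
  end.

Lemma tyconv_same_head s u : tyconv G s u -> same_head s u.
Proof.
  induction 1 as [s|s u _ IH|s u v _ IH1 _ IH2| |]; simpl; auto.
  - destruct s; simpl; auto using cv_refl, cvt_refl.
  - destruct s, u; simpl in *; intuition auto using cv_sym, cvt_sym.
  - destruct s, u, v; simpl in *; intuition eauto using cv_trans, cvt_trans.
Qed.

Lemma tyconv_pi_inv a b X : tyconv G (TPi a b) X ->
  exists a' b', X = TPi a' b' /\ tyconv G a a' /\ tyconv G b b'.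
Proof. intro H. apply tyconv_same_head in H. destruct X; simpl in H; try tauto. eauto. Qed.

Lemma tyconv_idx_inv X : tyconv G X TIdx -> X = TIdx.
Proof. intro H. apply tyconv_same_head in H. destruct X; simpl in H; tauto. Qed.

Lemma tsize_psubst f s : tsize G (psubst_ty f s) = tsize G s.
Proof. revert f. induction s; intros; simpl; auto. Qed.

Lemma tsize_subst j N s : tsize G (subst_ty j N s) = tsize G s.
Proof. rewrite subst_ty_psubst. apply tsize_psubst. Qed.

Lemma tsize_conv s u : tyconv G s u -> tsize G s = tsize G u.
Proof.
  revert u. induction s; intros u H; apply tyconv_same_head in H;
    destruct u; simpl in *; try tauto.
  destruct H. f_equal. f_equal; auto.
Qed.

Lemma tsize_pos s : 1 <= tsize G s.
Proof. destruct s; simpl; lia. Qed.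

Fixpoint ends_in_idx (s : ty) : Prop :=
  match s with
  | TIdx => True
  | TPi _ b => ends_in_idx b
  | _ => False
  end.

Lemma ends_in_idx_psubst f s : ends_in_idx (psubst_ty f s) <-> ends_in_idx s.
Proof. revert f. induction s; intros; simpl; try tauto. apply IHs2. Qed.

Lemma ends_in_idx_arrow a b : ends_in_idx (arrow a b) <-> ends_in_idx b.
Proof. unfold arrow. simpl. rewrite lift1_ty_ren. apply ends_in_idx_psubst. Qed.

Lemma ends_in_idx_conv s u : tyconv G s u -> ends_in_idx s <-> ends_in_idx u.
Proof.
  revert u. induction s; intros u H; apply tyconv_same_head in H;
    destruct u; simpl in *; try tauto.
  apply IHs2. tauto.
Qed.

Lemma yshape_not_idx s : yshape G s -> ~ ends_in_idx s.
Proof. induction 1; rewrite ?ends_in_idx_arrow; simpl; auto. Qed.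

Lemma yshape_psubst f s : yshape G s -> yshape G (psubst_ty f s).
Proof.
  induction 1; [constructor | constructor |].
  rewrite psubst_arrow. now constructor.
Qed.

Lemma length_ins i s (B : list ty) : length (ins G i s B) = S (length B).
Proof.
  unfold ins. rewrite length_map, length_app. simpl.
  rewrite <- (firstn_skipn i B) at 3. rewrite length_app. lia.
Qed.

Lemma in_ins x i s (B : list ty) :
  In x (ins G i s B) -> exists y, x = lift_ty 1 i y /\ (y = s \/ In y B).
Proof.
  unfold ins. rewrite in_map_iff. intros [y [<- Hy]]. exists y. split; [reflexivity|].
  rewrite <- (firstn_skipn i B), in_app_iff. rewrite in_app_iff in Hy.
  destruct Hy as [Hy | [-> | Hy]]; auto.
Qed.

Lemma ext_cons (B : list ty) s : ext G B s = lift_ty 1 0 s :: map (lift_ty 1 0) B.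
Proof. reflexivity. Qed.

Lemma ins_app (F S0 : list ty) u :
  ins G (length F) u (F ++ S0) = map (lift_ty 1 (length F)) (F ++ u :: S0).
Proof.
  unfold ins. rewrite firstn_app, skipn_app, Nat.sub_diag, firstn_all, skipn_all. simpl.
  now rewrite app_nil_r.
Qed.

Lemma split_list {A} (l : list A) i :
  i <= length l -> exists l1 l2, l = l1 ++ l2 /\ length l1 = i.
Proof.
  intro H. exists (firstn i l), (skipn i l).
  rewrite firstn_skipn, length_firstn. split; [reflexivity | lia].
Qed.

Definition closed_base (B : list ty) : Prop := forall t, In t B -> closed_ty (length B) t.

Variable arity : G -> nat.

Local Notation typ := (typ G arity).
Local Notation wf := (wf G arity).

Lemma closed_base_ins i s B :
  closed_ty (length B) s -> closed_base B -> closed_base (ins G i s B).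
Proof.
  intros Hs HB t Ht. rewrite length_ins.
  apply in_ins in Ht as [y [-> [-> | Hy]]]; apply closed_lift_ty; auto.
Qed.

Lemma closed_base_ext B s : closed_base (ext G B s) -> closed_ty (length B) s /\ closed_base B.
Proof.
  unfold closed_base. rewrite ext_cons. simpl. rewrite length_map. intro H. split.
  - apply closed_unlift_ty, H. now left.
  - intros t Ht. apply closed_unlift_ty, H. right. now apply in_map.
Qed.

Lemma typ_closed_mut :
  (forall B M s, typ B M s -> closed_tm (length B) M /\ closed_ty (length B) s /\ closed_base B) /\
  (forall B s, wf B s -> closed_ty (length B) s).
Proof.
  apply typ_wf_mutind; intros; simpl in *;
    repeat match goal with
    | H : _ /\ _ |- _ => destruct H
    | H : closed_base (ext G _ _) |- _ => apply closed_base_ext in H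
    end;
    unfold ext in *; rewrite ?length_ins, ?length_map in *;
    repeat (apply closed_arrow || split); simpl;
    auto using closed_lift_tm, closed_lift_ty, closed_base_ins, closed_subst0_ty with arith.
Qed.

Lemma typ_nil_closed N a : typ [] N a -> closed_tm 0 N /\ closed_ty 0 a.
Proof. intro H. apply typ_closed_mut in H. simpl in H. tauto. Qed.

(** * Weakening by interleaving bases *)

(* Weakening proves the well-formedness of both merged bases in one induction, on the sum
   of their derivation heights; hence this height-indexed copy of [typ] and [wf]. *)
Inductive typ_h : nat -> list ty -> tm -> ty -> Prop :=
| Th_var : forall n B i s, i <= length B ->
    (forall t, In t B -> wf_h n B t) -> wf_h n B s ->
    typ_h (S n) (ins G i s B) (tVar i) (lift_ty 1 i s)
| Th_lam : forall n B s N t, typ_h n (ext G B s) N t -> typ_h (S n) B (tLam s N) (TPi s t)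
| Th_app : forall n B P Q s t, typ_h n B P (TPi s t) -> typ_h n B Q s ->
    typ_h (S n) B (tApp P Q) (subst_ty 0 Q t)
| Th_succ : forall n B, (forall t, In t B -> wf_h n B t) -> typ_h (S n) B tSucc (arrow TNat TNat)
| Th_pred : forall n B, (forall t, In t B -> wf_h n B t) -> typ_h (S n) B tPred (arrow TNat TNat)
| Th_if : forall n B, (forall t, In t B -> wf_h n B t) ->
    typ_h (S n) B tIf (arrow TNat (arrow TNat (arrow TNat TNat)))
| Th_get : forall n B, (forall t, In t B -> wf_h n B t) ->
    typ_h (S n) B tGet (arrow TNat (arrow TNat TNat))
| Th_set : forall n B, (forall t, In t B -> wf_h n B t) ->
    typ_h (S n) B tSet (arrow TNat (arrow TNat TNat))
| Th_num : forall n B k, (forall t, In t B -> wf_h n B t) -> typ_h (S n) B (tNum k) TIdx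
| Th_gate : forall n B g, (forall t, In t B -> wf_h n B t) ->
    typ_h (S n) B (tGate g) (TCirc (tNum (arity g)))
| Th_ifc : forall n B E, typ_h n B E TIdx ->
    typ_h (S n) B tIf (arrow TNat (arrow (TCirc E) (arrow (TCirc E) (TCirc E))))
| Th_Y : forall n B s s', (forall t, In t B -> wf_h n B t) -> wf_h n B s ->
    tyconv G s s' -> yshape G s' -> typ_h (S n) B (tY s) (arrow (arrow s s) s)
| Th_idx : forall n B M, typ_h n B M TIdx -> typ_h (S n) B M TNat
| Th_plus : forall n B a b, typ_h n B a TIdx -> typ_h n B b TIdx -> typ_h (S n) B (tPlus a b) TIdx
| Th_mult : forall n B a b, typ_h n B a TIdx -> typ_h n B b TIdx -> typ_h (S n) B (tMult a b) TIdx
| Th_size : forall n B M E, typ_h n B M (TCirc E) -> typ_h (S n) B (tApp tSize M) TIdx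
| Th_cons : forall n B E, typ_h n B E TIdx ->
    typ_h (S n) B tCons (arrow (TCirc E) (arrow (TCirc E) (TCirc E)))
| Th_par : forall n B E0 E1, typ_h n B E0 TIdx -> typ_h n B E1 TIdx ->
    typ_h (S n) B tPar
      (arrow (TCirc E0) (arrow (TCirc E1) (TCirc (tPlus (tPlus E0 E1) (tNum 1)))))
| Th_rev : forall n B E, typ_h n B E TIdx -> typ_h (S n) B tRev (arrow (TCirc E) (TCirc E))
| Th_iter : forall n B E0 E1, typ_h n B E0 TIdx -> typ_h n B E1 TIdx ->
    typ_h (S n) B tIter
      (TPi TIdx (arrow (TCirc (lift_tm 1 0 E0))
                   (arrow (TCirc (lift_tm 1 0 E1))
                      (TCirc (tPlus (lift_tm 1 0 E0)
                                (tMult (tPlus (tNum 1) (lift_tm 1 0 E1)) (tVar 0)))))))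
| Th_dmeas : forall n B E, typ_h n B E TIdx ->
    typ_h (S n) B tDMeas (arrow TNat (arrow (TCirc E) TNat))
| Th_conv : forall n B M s t, typ_h n B M s -> tyconv G s t -> wf_h n B t -> typ_h (S n) B M t
with wf_h : nat -> list ty -> ty -> Prop :=
| Wh_nat : forall n B, wf_h (S n) B TNat
| Wh_idx : forall n B, wf_h (S n) B TIdx
| Wh_circ : forall n B E, typ_h n B E TIdx -> wf_h (S n) B (TCirc E)
| Wh_pi : forall n B s t, wf_h n B s -> wf_h n (ext G B s) t -> wf_h (S n) B (TPi s t).

Scheme typ_h_ind' := Minimality for typ_h Sort Prop
  with wf_h_ind' := Minimality for wf_h Sort Prop.
Combined Scheme typ_h_mutind from typ_h_ind', wf_h_ind'.

Lemma typ_h_mono_mut :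
  (forall n B M s, typ_h n B M s -> forall m, n <= m -> typ_h m B M s) /\
  (forall n B s, wf_h n B s -> forall m, n <= m -> wf_h m B s).
Proof.
  apply typ_h_mutind; intros; (destruct m as [|m]; [lia|]);
    econstructor; eauto with arith; intros; auto with arith.
Qed.

Lemma wf_h_list_bound B (L : list ty) :
  (forall t, In t L -> exists n, wf_h n B t) -> exists n, forall t, In t L -> wf_h n B t.
Proof.
  induction L as [|x L IH]; intros H; [exists 0; simpl; tauto|].
  destruct (H x (or_introl eq_refl)) as [n1 H1], IH as [n2 H2]; [intros; apply H; now right|].
  exists (Nat.max n1 n2). intros t [<- | Ht]; eapply typ_h_mono_mut; eauto; lia.
Qed.

(* Generalizes over the height-indexed hypotheses and offers one more than the sum of
   their heights as the height of the goal. *)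
Ltac bound_heights acc :=
  lazymatch goal with
  | H : typ_h ?k _ _ _ |- _ => revert H; bound_heights (k + acc)
  | H : wf_h ?k _ _ |- _ => revert H; bound_heights (k + acc)
  | H : forall t, In t _ -> wf_h ?k _ t |- _ => revert H; bound_heights (k + acc)
  | _ => exists (S acc); intros
  end.

Lemma typ_h_of_typ_mut :
  (forall B M s, typ B M s -> exists n, typ_h n B M s) /\
  (forall B s, wf B s -> exists n, wf_h n B s).
Proof.
  apply typ_wf_mutind; intros;
    repeat match goal with
    | H : forall t, In t ?B -> exists n, wf_h n ?B t |- _ => apply wf_h_list_bound in H
    | H : exists n, _ |- _ => destruct H
    end;
    bound_heights 0; econstructor; eauto;
    intros; eapply typ_h_mono_mut; eauto; lia.
Qed.

(* [merge m B E] interleaves the bases B and E: the i-th variable of the merge comes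
   from B if the i-th entry of m is [true] and from E otherwise; [left_pos m] and
   [right_pos m] send the variables of B and of E to their new positions. *)
Fixpoint left_pos (m : list bool) (k : nat) : nat :=
  match m with
  | [] => k
  | true :: m' => match k with 0 => 0 | S k' => S (left_pos m' k') end
  | false :: m' => S (left_pos m' k)
  end.

Fixpoint count_left (m : list bool) : nat :=
  match m with
  | [] => 0
  | true :: m' => S (count_left m')
  | false :: m' => count_left m'
  end.

Definition right_pos (m : list bool) : nat -> nat := left_pos (map negb m).

Definition count_right (m : list bool) : nat := count_left (map negb m).

Fixpoint interleave {A : Type} (m : list bool) (X Y : list A) : list A :=
  match m with
  | [] => []
  | true :: m' => match X with x :: X' => x :: interleave m' X' Y | [] => [] end
  | false :: m' => match Y with y :: Y' => y :: interleave m' X Y' | [] => [] end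
  end.

Definition merge (m : list bool) (B E : list ty) : list ty :=
  interleave m (map (psubst_ty (ren (left_pos m))) B) (map (psubst_ty (ren (right_pos m))) E).

Lemma map_negb_involutive m : map negb (map negb m) = m.
Proof. induction m as [|b m IH]; simpl; [|rewrite Bool.negb_involutive, IH]; reflexivity. Qed.

Lemma interleave_negb {A} m (X Y : list A) : interleave (map negb m) Y X = interleave m X Y.
Proof.
  revert X Y; induction m as [|[|] m IH]; intros [|x X] [|y Y]; simpl; f_equal; auto.
Qed.

Lemma merge_negb m B E : merge (map negb m) E B = merge m B E.
Proof.
  unfold merge, right_pos. now rewrite interleave_negb, map_negb_involutive.
Qed.

Lemma map_interleave {A A'} (f : A -> A') m X Y :
  map f (interleave m X Y) = interleave m (map f X) (map f Y).
Proof.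
  revert X Y; induction m as [|[|] m IH]; intros [|x X] [|y Y]; simpl; f_equal; auto.
Qed.

Lemma interleave_app {A} m1 m2 (X1 X2 Y1 Y2 : list A) :
  count_left m1 = length X1 -> count_right m1 = length Y1 ->
  interleave (m1 ++ m2) (X1 ++ X2) (Y1 ++ Y2) = interleave m1 X1 Y1 ++ interleave m2 X2 Y2.
Proof.
  unfold count_right. revert X1 Y1; induction m1 as [|[|] m1 IH]; intros X1 Y1 H1 H2; simpl in *.
  - destruct X1, Y1; simpl in *; [reflexivity | lia ..].
  - destruct X1 as [|x X1]; simpl in *; [lia|]. f_equal. apply IH; lia.
  - destruct Y1 as [|y Y1]; simpl in *; [lia|]. f_equal. apply IH; lia.
Qed.

Lemma length_interleave {A} m (X Y : list A) :
  count_left m = length X -> count_right m = length Y -> length (interleave m X Y) = length m.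
Proof.
  unfold count_right. revert X Y; induction m as [|[|] m IH]; intros X Y H1 H2; simpl in *.
  - reflexivity.
  - destruct X as [|x X]; simpl in *; [lia|]. f_equal. apply IH; lia.
  - destruct Y as [|y Y]; simpl in *; [lia|]. f_equal. apply IH; lia.
Qed.

Lemma in_interleave {A} (t : A) m X Y : In t (interleave m X Y) -> In t X \/ In t Y.
Proof.
  revert X Y; induction m as [|[|] m IH]; intros [|x X] [|y Y]; simpl; try tauto;
    intros [H | H]; auto; apply IH in H; simpl; tauto.
Qed.

Lemma in_merge t m B E : In t (merge m B E) ->
  (exists x, In x B /\ t = psubst_ty (ren (left_pos m)) x) \/
  (exists y, In y E /\ t = psubst_ty (ren (right_pos m)) y).
Proof.
  unfold merge. intro H. apply in_interleave in H as [H | H]; apply in_map_iff in H as [x [<- Hx]];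
    eauto.
Qed.

Lemma length_merge m B E :
  count_left m = length B -> count_right m = length E -> length (merge m B E) = length m.
Proof. intros. unfold merge. apply length_interleave; now rewrite length_map. Qed.

Lemma count_left_app m1 m2 : count_left (m1 ++ m2) = count_left m1 + count_left m2.
Proof. induction m1 as [|[|] m1 IH]; simpl; lia. Qed.

Lemma count_right_app m1 m2 : count_right (m1 ++ m2) = count_right m1 + count_right m2.
Proof. unfold count_right. now rewrite map_app, count_left_app. Qed.

Lemma split_at_true m i :
  i < count_left m -> exists m1 m2, m = m1 ++ true :: m2 /\ count_left m1 = i.
Proof.
  revert i; induction m as [|[|] m IH]; intros i H; simpl in *; try lia.
  - destruct i as [|i]; [now exists [], m|].
    destruct (IH i ltac:(lia)) as (m1 & m2 & -> & <-). now exists (true :: m1), m2.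
  - destruct (IH i H) as (m1 & m2 & -> & <-). now exists (false :: m1), m2.
Qed.

Lemma left_pos_insert m1 m2 k :
  left_pos (m1 ++ true :: m2) (bump 1 (count_left m1) k) =
  bump 1 (length m1) (left_pos (m1 ++ m2) k).
Proof.
  unfold bump. revert k; induction m1 as [|[|] m1 IH]; intros k; simpl.
  - rewrite Nat.add_1_r. simpl. lia.
  - destruct k as [|k]; simpl; [reflexivity|]. specialize (IH k). revert IH.
    destruct (count_left m1 <=? k), (length m1 <=? left_pos (m1 ++ m2) k);
      simpl; intros ->; reflexivity.
  - rewrite IH. now destruct (length m1 <=? left_pos (m1 ++ m2) k).
Qed.

Lemma left_pos_insert_false m1 m2 k :
  left_pos (m1 ++ false :: m2) k = bump 1 (length m1) (left_pos (m1 ++ m2) k).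
Proof.
  unfold bump. revert k; induction m1 as [|[|] m1 IH]; intros k; simpl.
  - lia.
  - destruct k as [|k]; simpl; [reflexivity|]. rewrite IH.
    now destruct (length m1 <=? left_pos (m1 ++ m2) k).
  - rewrite IH. now destruct (length m1 <=? left_pos (m1 ++ m2) k).
Qed.

Lemma right_pos_insert m1 m2 k :
  right_pos (m1 ++ true :: m2) k = bump 1 (length m1) (right_pos (m1 ++ m2) k).
Proof.
  unfold right_pos. rewrite !map_app. simpl. rewrite left_pos_insert_false.
  now rewrite length_map.
Qed.

Lemma left_pos_at m1 m2 : left_pos (m1 ++ true :: m2) (count_left m1) = length m1.
Proof. induction m1 as [|[|] m1 IH]; simpl; auto. Qed.

Lemma psubst_ren_lift_ty r j s :
  psubst_ty (ren r) (lift_ty 1 j s) = psubst_ty (ren (fun k => r (bump 1 j k))) s.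
Proof. apply psubst_ty_lift. Qed.

Lemma lift_psubst_ren_ty r j s :
  lift_ty 1 j (psubst_ty (ren r) s) = psubst_ty (ren (fun k => bump 1 j (r k))) s.
Proof. now rewrite lift_ty_psubst, (proj2 psubst_ren_ren_mut). Qed.

Lemma merge_ext m B E s :
  merge (true :: m) (ext G B s) E = ext G (merge m B E) (psubst_ty (ren (left_pos m)) s).
Proof.
  unfold merge, ext, ins, right_pos. simpl. rewrite map_interleave, !map_map.
  f_equal; [|f_equal; apply map_ext; intro x].
  all: rewrite ?psubst_ren_lift_ty, lift_psubst_ren_ty; apply psubst_ty_ext; intro k;
    unfold ren, bump;
    simpl; rewrite ?Nat.add_1_r; reflexivity.
Qed.

Lemma psubst_left_pos_lift m1 m2 x :
  psubst_ty (ren (left_pos (m1 ++ true :: m2))) (lift_ty 1 (count_left m1) x) =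
  lift_ty 1 (length m1) (psubst_ty (ren (left_pos (m1 ++ m2))) x).
Proof.
  rewrite psubst_ren_lift_ty, lift_psubst_ren_ty. apply psubst_ty_ext. intro k.
  unfold ren. now rewrite left_pos_insert.
Qed.

Lemma merge_ins m1 m2 u B E :
  count_left (m1 ++ true :: m2) = S (length B) -> count_right (m1 ++ true :: m2) = length E ->
  merge (m1 ++ true :: m2) (ins G (count_left m1) u B) E =
  ins G (length m1) (psubst_ty (ren (left_pos (m1 ++ m2))) u) (merge (m1 ++ m2) B E).
Proof.
  rewrite count_left_app, count_right_app. simpl. intros HB HE.
  destruct (split_list B (count_left m1)) as (F & S0 & -> & HF); [lia|].
  destruct (split_list E (count_right m1)) as (E1 & E2 & -> & HE1); [lia|].
  assert (Hright : forall y, psubst_ty (ren (right_pos (m1 ++ true :: m2))) y =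
                             lift_ty 1 (length m1) (psubst_ty (ren (right_pos (m1 ++ m2))) y)).
  { intro y. rewrite lift_psubst_ren_ty. apply psubst_ty_ext. intro k.
    unfold ren. now rewrite right_pos_insert. }
  rewrite <- HF, ins_app. unfold merge. rewrite !map_app, map_map. simpl.
  rewrite !interleave_app by (rewrite length_map; auto). simpl.
  rewrite <- (length_interleave m1 (map (psubst_ty (ren (left_pos (m1 ++ m2)))) F)
                (map (psubst_ty (ren (right_pos (m1 ++ m2)))) E1)) at 1
    by (rewrite length_map; auto).
  rewrite ins_app, map_app, !map_interleave, !map_map. simpl. rewrite !map_interleave, !map_map.
  rewrite length_interleave, HF by (rewrite length_map; auto).
  f_equal; [|f_equal; [apply psubst_left_pos_lift|]]; f_equal; apply map_ext;
    auto using psubst_left_pos_lift.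
Qed.

Definition weakens_typ (n : nat) : Prop :=
  forall h B M s, typ_h h B M s -> forall hx m E, h + hx <= n ->
    count_left m = length B -> count_right m = length E -> (forall t, In t E -> wf_h hx E t) ->
    typ (merge m B E) (psubst_tm (ren (left_pos m)) M) (psubst_ty (ren (left_pos m)) s).

Definition weakens_wf (n : nat) : Prop :=
  forall h B s, wf_h h B s -> forall hx m E, h + hx <= n ->
    count_left m = length B -> count_right m = length E -> (forall t, In t E -> wf_h hx E t) ->
    wf (merge m B E) (psubst_ty (ren (left_pos m)) s).

(* The types of E are weakened by the same induction, with the roles of B and E exchanged. *)
Lemma merge_base_wf n : weakens_wf n ->
  forall h hx m B E, h + hx <= n -> count_left m = length B -> count_right m = length E ->
  (forall t, In t B -> wf_h h B t) -> (forall t, In t E -> wf_h hx E t) ->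
  forall t, In t (merge m B E) -> wf (merge m B E) t.
Proof.
  intros IH h hx m B E Hle HB HE HwB HwE t Ht.
  apply in_merge in Ht as [[x [Hx ->]] | [y [Hy ->]]]; [eapply IH; eauto|].
  rewrite <- merge_negb. eapply IH; [apply HwE, Hy | | exact HE | | exact HwB]; [lia|].
  unfold count_right. now rewrite map_negb_involutive.
Qed.

Lemma up_left_pos m k : up (ren (left_pos m)) k = ren (left_pos (true :: m)) k.
Proof. rewrite up_ren. now destruct k. Qed.

Lemma weakens_var n : weakens_wf n ->
  forall h B i s hx m C, h + hx <= n -> i <= length B ->
  (forall t, In t B -> wf_h h B t) -> wf_h h B s ->
  count_left m = length (ins G i s B) -> count_right m = length C ->
  (forall t, In t C -> wf_h hx C t) ->
  typ (merge m (ins G i s B) C) (tVar (left_pos m i))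
      (psubst_ty (ren (left_pos m)) (lift_ty 1 i s)).
Proof.
  intros IHw h B i s hx m C Hle Hi HwB Hs HB HC HwC.
  rewrite length_ins in HB.
  destruct (split_at_true m i) as (m1 & m2 & -> & <-); [lia|].
  rewrite count_left_app in HB. simpl in HB.
  assert (HB' : count_left (m1 ++ m2) = length B) by (rewrite count_left_app; lia).
  assert (HC' : count_right (m1 ++ m2) = length C) by (rewrite count_right_app in *; exact HC).
  rewrite merge_ins, psubst_left_pos_lift, left_pos_at
    by (rewrite ?count_left_app; simpl; auto with arith).
  apply T_var.
  - rewrite length_merge, length_app by assumption. lia.
  - eapply merge_base_wf; eauto.
  - eapply IHw; eauto.
Qed.

Lemma weakens_upto n : weakens_typ n /\ weakens_wf n.
Proof.
  induction n as [|n [IHt IHw]].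
  { split; intros h * D; destruct D; intros; lia. }
  pose proof (merge_base_wf n IHw) as IHbase. unfold weakens_typ, weakens_wf in *. split.
  - intros h B M s D. destruct D; intros hx m C Hle HB HC HwC;
      repeat (rewrite ?psubst_arrow, ?psubst_tm_up_lift, ?psubst_ty_subst0;
              cbn [psubst_tm psubst_ty]).
    1: { eapply weakens_var; eauto; lia. }
    1: {
      pose proof (IHt _ _ _ _ D hx (true :: m) C ltac:(lia)) as IH.
      rewrite merge_ext in IH. apply T_lam.
      rewrite (psubst_tm_ext _ _ _ (up_left_pos m)), (psubst_ty_ext _ _ _ (up_left_pos m)).
      apply IH; auto. unfold ext. rewrite length_ins. simpl. auto. }
    all: repeat match goal with
      | D : typ_h _ _ _ _ |- _ => pose proof (IHt _ _ _ _ D hx m C ltac:(lia) HB HC HwC); clear D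
      | D : wf_h _ _ _ |- _ => pose proof (IHw _ _ _ D hx m C ltac:(lia) HB HC HwC); clear D
      | D : forall t, In t ?B -> wf_h ?k ?B t |- _ =>
          pose proof (IHbase k hx m B C ltac:(lia) HB HC D HwC); clear D
      end; cbn [psubst_tm psubst_ty] in *.
    all: econstructor; eauto using tyconv_psubst, yshape_psubst.
  - intros h B s D. destruct D as [| |h B E D|h B s t D1 D2];
      intros hx m C Hle HB HC HwC; cbn [psubst_ty]; constructor.
    + exact (IHt _ _ _ _ D hx m C ltac:(lia) HB HC HwC).
    + exact (IHw _ _ _ D1 hx m C ltac:(lia) HB HC HwC).
    + pose proof (IHw _ _ _ D2 hx (true :: m) C ltac:(lia)) as IH.
      rewrite merge_ext in IH. rewrite (psubst_ty_ext _ _ _ (up_left_pos m)).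
      apply IH; auto. unfold ext. rewrite length_ins. simpl. auto.
Qed.

Lemma left_pos_all_true n k : left_pos (repeat true n) k = k.
Proof. revert k; induction n as [|n IH]; intros [|k]; simpl; auto. Qed.

Lemma merge_all_right C : merge (repeat false (length C)) [] C = C.
Proof.
  unfold merge, right_pos. rewrite map_repeat. simpl.
  replace (map _ C) with C.
  - induction C as [|x C IH]; simpl; f_equal; auto.
  - rewrite <- (map_id C) at 1. apply map_ext. intro x.
    rewrite <- (psubst_ty_id x) at 1. apply psubst_ty_ext. intro k. unfold ren.
    now rewrite left_pos_all_true.
Qed.

Lemma count_all_right n : count_left (repeat false n) = 0 /\ count_right (repeat false n) = n.
Proof.
  unfold count_right. rewrite map_repeat. simpl.
  induction n as [|n IH]; simpl; [auto|]. destruct IH. auto.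
Qed.

Lemma typ_weaken_closed N a C :
  typ [] N a -> (forall t, In t C -> wf C t) -> typ C N a.
Proof.
  intros HN HC.
  destruct (proj1 typ_h_of_typ_mut _ _ _ HN) as [h Hh].
  destruct (wf_h_list_bound C C) as [hx Hx]; [intros t Ht; apply typ_h_of_typ_mut; auto|].
  destruct (count_all_right (length C)) as [Hl Hr].
  pose proof (proj1 (weakens_upto (h + hx)) h [] N a Hh hx _ C (le_n _) Hl Hr Hx) as H.
  destruct (typ_nil_closed N a HN) as [HcN Hca].
  now rewrite merge_all_right, closed0_psubst_tm, closed0_psubst_ty in H.
Qed.

(** * Instantiating variables of a base by closed terms *)

(* Entry i of [tau] is [Some N] if variable i is replaced by the closed term N, and
   [None] if it is kept; kept variables are renumbered consecutively. *)
Fixpoint inst (tau : list (option tm)) : nat -> tm :=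
  match tau with
  | [] => @tVar G
  | None :: tau' => up (inst tau')
  | Some N :: tau' => fun k => match k with 0 => N | S k' => inst tau' k' end
  end.

Fixpoint kept (tau : list (option tm)) : nat :=
  match tau with
  | [] => 0
  | None :: tau' => S (kept tau')
  | Some _ :: tau' => kept tau'
  end.

Fixpoint kept_base (tau : list (option tm)) (B : list ty) : list ty :=
  match tau, B with
  | None :: tau', x :: B' => x :: kept_base tau' B'
  | Some _ :: tau', _ :: B' => kept_base tau' B'
  | _, _ => []
  end.

Definition inst_base (tau : list (option tm)) (B : list ty) : list ty :=
  map (psubst_ty (inst tau)) (kept_base tau B).

Definition inst_closed (tau : list (option tm)) : Prop :=
  forall N, In (Some N) tau -> closed_tm 0 N.

Definition inst_ok (tau : list (option tm)) (B : list ty) : Prop :=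
  length tau = length B /\
  forall i N, nth_error tau i = Some (Some N) ->
    exists a, typ [] N a /\ tyconv G a (psubst_ty (inst tau) (nth i B TNat)).

Lemma inst_bump_None tau1 tau2 k : inst_closed tau1 ->
  inst (tau1 ++ None :: tau2) (bump 1 (length tau1) k) =
  lift_tm 1 (kept tau1) (inst (tau1 ++ tau2) k).
Proof.
  unfold inst_closed. revert k; induction tau1 as [|[N|] tau1 IH]; intros k HN; simpl.
  - now rewrite bump_0.
  - destruct k as [|k]; simpl.
    + rewrite closed0_lift_tm; auto using in_eq.
    + rewrite bump_S. simpl. apply IH. auto using in_cons.
  - destruct k as [|k]; simpl; [reflexivity|].
    rewrite bump_S. simpl. rewrite IH, lift_lift_tm; auto using in_cons.
Qed.

Lemma inst_bump_Some tau1 tau2 N k :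
  inst (tau1 ++ Some N :: tau2) (bump 1 (length tau1) k) = inst (tau1 ++ tau2) k.
Proof.
  revert k; induction tau1 as [|[M|] tau1 IH]; intros k; simpl.
  - now rewrite bump_0.
  - destruct k as [|k]; [reflexivity|]. rewrite bump_S. simpl. apply IH.
  - destruct k as [|k]; [reflexivity|]. rewrite bump_S. simpl. now rewrite IH.
Qed.

Lemma inst_at_Some tau1 tau2 N : closed_tm 0 N -> inst (tau1 ++ Some N :: tau2) (length tau1) = N.
Proof.
  intro HN. induction tau1 as [|[M|] tau1 IH]; simpl; auto.
  rewrite IH. now apply closed0_lift_tm.
Qed.

Lemma inst_at_None tau1 tau2 : inst (tau1 ++ None :: tau2) (length tau1) = tVar (kept tau1).
Proof.
  induction tau1 as [|[M|] tau1 IH]; simpl; auto. rewrite IH. simpl. f_equal. lia.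
Qed.

Lemma psubst_inst_lift_None tau1 tau2 x : inst_closed tau1 ->
  psubst_ty (inst (tau1 ++ None :: tau2)) (lift_ty 1 (length tau1) x) =
  lift_ty 1 (kept tau1) (psubst_ty (inst (tau1 ++ tau2)) x).
Proof.
  intro H. rewrite psubst_ty_lift, lift_ty_psubst, psubst_ty_comp. apply psubst_ty_ext. intro k.
  rewrite <- lift_tm_psubst. now apply inst_bump_None.
Qed.

Lemma psubst_ty_inst_lift_Some tau1 tau2 N x :
  psubst_ty (inst (tau1 ++ Some N :: tau2)) (lift_ty 1 (length tau1) x) =
  psubst_ty (inst (tau1 ++ tau2)) x.
Proof. rewrite psubst_ty_lift. apply psubst_ty_ext, inst_bump_Some. Qed.

Lemma psubst_tm_inst_lift_Some tau1 tau2 N x :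
  psubst_tm (inst (tau1 ++ Some N :: tau2)) (lift_tm 1 (length tau1) x) =
  psubst_tm (inst (tau1 ++ tau2)) x.
Proof. rewrite psubst_tm_lift. apply psubst_tm_ext, inst_bump_Some. Qed.

Lemma psubst_inst_cons_lift A tau x :
  psubst_ty (inst (Some A :: tau)) (lift_ty 1 0 x) = psubst_ty (inst tau) x.
Proof. exact (psubst_ty_inst_lift_Some [] tau A x). Qed.

Lemma kept_app tau1 tau2 : kept (tau1 ++ tau2) = kept tau1 + kept tau2.
Proof. induction tau1 as [|[x|] tau1 IH]; simpl; auto. Qed.

Lemma kept_base_app tau1 tau2 X1 X2 : length tau1 = length X1 ->
  kept_base (tau1 ++ tau2) (X1 ++ X2) = kept_base tau1 X1 ++ kept_base tau2 X2.
Proof.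
  revert X1; induction tau1 as [|[M|] tau1 IH]; intros [|x X1] H; simpl in *; try lia; auto.
  f_equal. apply IH. lia.
Qed.

Lemma kept_base_map tau B f : kept_base tau (map f B) = map f (kept_base tau B).
Proof.
  revert B; induction tau as [|[M|] tau IH]; intros [|x B]; simpl; f_equal; auto.
Qed.

Lemma length_kept_base tau B : length tau = length B -> length (kept_base tau B) = kept tau.
Proof.
  revert B; induction tau as [|[M|] tau IH]; intros [|x B] H; simpl in *; try lia; auto.
Qed.

Lemma in_kept_base t tau B : In t (kept_base tau B) -> In t B.
Proof.
  revert B; induction tau as [|[M|] tau IH]; intros [|x B]; simpl; try tauto.
  - intro H. right. auto.
  - intros [H | H]; auto.
Qed.

Lemma in_inst_base t tau B :
  In t (inst_base tau B) -> exists x, In x B /\ t = psubst_ty (inst tau) x.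
Proof.
  unfold inst_base. rewrite in_map_iff. intros [x [<- Hx]]. eauto using in_kept_base.
Qed.

Lemma inst_base_ext tau B s :
  inst_base (None :: tau) (ext G B s) = ext G (inst_base tau B) (psubst_ty (inst tau) s).
Proof.
  unfold inst_base, ext, ins. simpl. rewrite psubst_ty_up_lift, kept_base_map, !map_map.
  f_equal. apply map_ext. intro. apply psubst_ty_up_lift.
Qed.

Lemma inst_base_ins_None tau1 tau2 u F S0 : inst_closed tau1 -> length F = length tau1 ->
  inst_base (tau1 ++ None :: tau2) (ins G (length tau1) u (F ++ S0)) =
  ins G (kept tau1) (psubst_ty (inst (tau1 ++ tau2)) u) (inst_base (tau1 ++ tau2) (F ++ S0)).
Proof.
  intros Hc HF. unfold inst_base. rewrite <- HF, ins_app, HF, kept_base_map, !kept_base_app by auto.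
  simpl. rewrite !map_map, !map_app. simpl.
  rewrite <- (length_kept_base tau1 F), <- (length_map (psubst_ty (inst (tau1 ++ tau2)))) by auto.
  rewrite ins_app, map_app. simpl. rewrite !map_map, !length_map, length_kept_base by auto.
  f_equal; [|f_equal]; try apply map_ext; intros; apply psubst_inst_lift_None; auto.
Qed.

Lemma inst_base_ins_Some tau1 tau2 N u F S0 : length F = length tau1 ->
  inst_base (tau1 ++ Some N :: tau2) (ins G (length tau1) u (F ++ S0)) =
  inst_base (tau1 ++ tau2) (F ++ S0).
Proof.
  intro HF. unfold inst_base. rewrite <- HF, ins_app, HF, kept_base_map, !kept_base_app by auto.
  simpl. rewrite !map_map, !map_app.
  f_equal; apply map_ext; intro; apply psubst_ty_inst_lift_Some.
Qed.

Lemma nth_map_lift d c n (l : list ty) :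
  nth n (map (lift_ty d c) l) TNat = lift_ty d c (nth n l TNat).
Proof. exact (map_nth (lift_ty d c) l TNat n). Qed.

Lemma nth_insert_bump {A} (l1 l2 : list A) x j d :
  nth (bump 1 (length l1) j) (l1 ++ x :: l2) d = nth j (l1 ++ l2) d.
Proof.
  unfold bump. destruct (Nat.leb_spec (length l1) j).
  - rewrite !app_nth2 by lia. now replace (j + 1 - length l1) with (S (j - length l1)) by lia.
  - now rewrite !app_nth1 by lia.
Qed.

Lemma nth_error_insert_bump {A} (l1 l2 : list A) x j :
  nth_error (l1 ++ x :: l2) (bump 1 (length l1) j) = nth_error (l1 ++ l2) j.
Proof.
  unfold bump. destruct (Nat.leb_spec (length l1) j).
  - rewrite !nth_error_app2 by lia. now replace (j + 1 - length l1) with (S (j - length l1)) by lia.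
  - now rewrite !nth_error_app1 by lia.
Qed.

Lemma tyconv_lift_closed a X j : closed_ty 0 a -> tyconv G a X -> tyconv G a (lift_ty 1 j X).
Proof.
  intros Ha H. apply (tyconv_psubst (ren (bump 1 j))) in H.
  now rewrite (closed0_psubst_ty _ a Ha), <- lift_ty_psubst in H.
Qed.

Lemma tyconv_unlift_closed a X j : closed_ty 0 a -> tyconv G a (lift_ty 1 j X) -> tyconv G a X.
Proof.
  intros Ha H. apply (tyconv_psubst (single_sub j (tNum 0))) in H.
  now rewrite (closed0_psubst_ty _ a Ha), <- subst_ty_psubst, subst_lift_ty in H.
Qed.

Lemma inst_ok_closed tau B : inst_ok tau B -> inst_closed tau.
Proof.
  intros [_ H] N HN. apply In_nth_error in HN as [i Hi].
  destruct (H i N Hi) as (a & Ha & _). now apply typ_nil_closed in Ha.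
Qed.

Lemma inst_ok_ext tau B s : inst_ok tau B -> inst_ok (None :: tau) (ext G B s).
Proof.
  intros [Hl H]. split; [unfold ext; rewrite length_ins; simpl; lia|].
  intros [|i] N Hi; [discriminate|]. destruct (H i N Hi) as (a & Ha & Hc).
  exists a. split; [assumption|].
  rewrite ext_cons. simpl. rewrite nth_map_lift, psubst_ty_up_lift.
  apply tyconv_lift_closed; [now apply typ_nil_closed in Ha | assumption].
Qed.

Lemma inst_ok_cons_Some tau B s A a : inst_ok tau B -> typ [] A a ->
  tyconv G a (psubst_ty (inst tau) s) -> inst_ok (Some A :: tau) (ext G B s).
Proof.
  intros [Hl H] HA Hc. split; [unfold ext; rewrite length_ins; simpl; lia|].
  rewrite ext_cons. intros [|i] N Hi; simpl in Hi; cbn [nth].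
  - injection Hi as <-. exists a. now rewrite psubst_inst_cons_lift.
  - destruct (H i N Hi) as (a' & Ha' & Hc'). exists a'.
    now rewrite nth_map_lift, psubst_inst_cons_lift.
Qed.

Lemma inst_ok_remove tau1 o tau2 u F S0 : length tau1 = length F ->
  inst_ok (tau1 ++ o :: tau2) (ins G (length F) u (F ++ S0)) -> inst_ok (tau1 ++ tau2) (F ++ S0).
Proof.
  intros HF Hok. pose proof (inst_ok_closed _ _ Hok) as Hc. destruct Hok as [Hl H].
  rewrite ins_app in Hl, H. rewrite !length_app, length_map, length_app in Hl. simpl in Hl.
  split; [rewrite !length_app; lia|]. intros j N Hj.
  rewrite <- (nth_error_insert_bump _ _ o), HF in Hj.
  destruct (H _ _ Hj) as (a & Ha & Hconv). exists a. split; [assumption|].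
  rewrite nth_map_lift, nth_insert_bump in Hconv. rewrite <- HF in Hconv.
  destruct o as [M|].
  - now rewrite psubst_ty_inst_lift_Some in Hconv.
  - rewrite psubst_inst_lift_None in Hconv.
    + eapply tyconv_unlift_closed; [apply (typ_nil_closed _ _ Ha) | eassumption].
    + intros M HM. apply Hc, in_or_app. now left.
Qed.

Lemma inst_ok_at_Some tau1 tau2 N u F S0 : length tau1 = length F ->
  inst_ok (tau1 ++ Some N :: tau2) (ins G (length F) u (F ++ S0)) ->
  exists a, typ [] N a /\ tyconv G a (psubst_ty (inst (tau1 ++ tau2)) u).
Proof.
  intros HF [_ H]. rewrite ins_app in H.
  destruct (H (length tau1) N) as (a & Ha & Hconv);
    [now rewrite nth_error_app2, Nat.sub_diag by lia|].
  exists a. split; [assumption|].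
  rewrite nth_map_lift, app_nth2, HF, Nat.sub_diag in Hconv by lia. simpl in Hconv.
  now rewrite <- HF, psubst_ty_inst_lift_Some in Hconv.
Qed.

Lemma length_inst_base tau B : length tau = length B -> length (inst_base tau B) = kept tau.
Proof. intro H. unfold inst_base. now rewrite length_map, length_kept_base. Qed.

Lemma typ_inst_var B i s tau : i <= length B ->
  (forall t, In t B -> forall tau, inst_ok tau B ->
     wf (inst_base tau B) (psubst_ty (inst tau) t)) ->
  (forall tau, inst_ok tau B -> wf (inst_base tau B) (psubst_ty (inst tau) s)) ->
  inst_ok tau (ins G i s B) ->
  typ (inst_base tau (ins G i s B)) (inst tau i) (psubst_ty (inst tau) (lift_ty 1 i s)).
Proof.
  intros Hi HB Hs Hok.
  destruct (split_list B i Hi) as (F & S0 & -> & <-).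
  pose proof (proj1 Hok) as Hl. rewrite length_ins, length_app in Hl.
  destruct (split_list tau (length F)) as (tau1 & [|o tau2] & -> & HF); [lia| |];
    rewrite length_app in Hl; simpl in Hl; [lia|].
  pose proof (inst_ok_remove _ _ _ _ _ _ HF Hok) as Hok'.
  assert (Hbase : forall t, In t (inst_base (tau1 ++ tau2) (F ++ S0)) ->
                            wf (inst_base (tau1 ++ tau2) (F ++ S0)) t).
  { intros t Ht. apply in_inst_base in Ht as (x & Hx & ->). auto. }
  rewrite <- HF. destruct o as [N|].
  - destruct (inst_ok_at_Some _ _ _ _ _ _ HF Hok) as (a & Ha & Hconv).
    rewrite inst_base_ins_Some, inst_at_Some, psubst_ty_inst_lift_Some by
      (auto; now apply typ_nil_closed in Ha).
    eapply T_conv; [apply typ_weaken_closed; eauto | eassumption | auto].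
  - assert (Hc : inst_closed tau1).
    { intros M HM. apply (inst_ok_closed _ _ Hok), in_or_app. now left. }
    rewrite inst_base_ins_None, inst_at_None, psubst_inst_lift_None by auto.
    apply T_var; auto.
    rewrite length_inst_base, kept_app by (rewrite !length_app; lia). lia.
Qed.

Lemma inst_base_wf tau B : inst_ok tau B ->
  (forall t, In t B -> forall tau, inst_ok tau B ->
     wf (inst_base tau B) (psubst_ty (inst tau) t)) ->
  forall t, In t (inst_base tau B) -> wf (inst_base tau B) t.
Proof. intros Hok HB t Ht. apply in_inst_base in Ht as (x & Hx & ->). auto. Qed.

Lemma typ_inst_mut :
  (forall B M s, typ B M s -> forall tau, inst_ok tau B ->
     typ (inst_base tau B) (psubst_tm (inst tau) M) (psubst_ty (inst tau) s)) /\
  (forall B s, wf B s -> forall tau, inst_ok tau B ->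
     wf (inst_base tau B) (psubst_ty (inst tau) s)).
Proof.
  apply typ_wf_mutind; intros.
  all: repeat (rewrite ?psubst_arrow, ?psubst_tm_up_lift, ?psubst_ty_subst0;
               cbn [psubst_tm psubst_ty]).
  1: now apply typ_inst_var.
  all: econstructor; eauto using tyconv_psubst, yshape_psubst, inst_base_wf.
  all: rewrite <- inst_base_ext; auto using inst_ok_ext.
Qed.

Lemma inst_all_None r k : inst (repeat None r) k = tVar k.
Proof.
  revert k; induction r as [|r IH]; intros k; simpl; auto.
  destruct k as [|k]; simpl; auto. rewrite IH. simpl. f_equal. lia.
Qed.

Lemma inst_single i r N k : closed_tm 0 N ->
  inst (repeat None i ++ Some N :: repeat None r) k = single_sub i N k.
Proof.
  intro HN. revert k; induction i as [|i IH]; intros k; simpl.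
  - destruct k as [|k]; unfold single_sub; simpl; [now rewrite lift0_tm|].
    rewrite inst_all_None. f_equal. lia.
  - rewrite <- up_single_sub. now apply up_ext.
Qed.

Lemma kept_base_all_None r (X : list ty) : length X = r -> kept_base (repeat None r) X = X.
Proof. revert X; induction r; intros [|x X] H; simpl in *; f_equal; auto; lia. Qed.

Lemma nth_error_single i r N j M :
  nth_error (repeat None i ++ Some N :: repeat (@None tm) r) j = Some (Some M) -> j = i /\ M = N.
Proof.
  intro H. destruct (Nat.lt_ge_cases j i) as [Hj | Hj].
  - rewrite nth_error_app1 in H by (rewrite repeat_length; lia).
    apply nth_error_In, repeat_spec in H. discriminate.
  - rewrite nth_error_app2 in H by (rewrite repeat_length; lia). rewrite repeat_length in H.
    destruct (j - i) as [|k] eqn:E; simpl in H.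
    + injection H as ->. split; [lia | reflexivity].
    + apply nth_error_In, repeat_spec in H. discriminate.
Qed.

Lemma remove_at_app (F S0 : list ty) x : remove_at G (length F) (F ++ x :: S0) = F ++ S0.
Proof. unfold remove_at. induction F as [|y F IH]; simpl; f_equal; auto. Qed.

Lemma typ_subst B M s i N : typ B M s -> i < length B -> typ [] N (nth i B TNat) ->
  typ (map (subst_ty i N) (remove_at G i B)) (subst_tm i N M) (subst_ty i N s).
Proof.
  intros HM Hi HN. destruct (typ_nil_closed _ _ HN) as [HNc Hac].
  set (tau := repeat None i ++ Some N :: repeat None (length B - S i)).
  assert (Hinst : forall k, inst tau k = single_sub i N k) by (intro; now apply inst_single).
  assert (Hok : inst_ok tau B).
  { split; [unfold tau; rewrite length_app; simpl; rewrite !repeat_length; lia|].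
    intros j M' Hj. apply nth_error_single in Hj as [-> ->].
    exists (nth i B TNat). split; [assumption|]. rewrite closed0_psubst_ty by assumption.
    apply cvt_refl. }
  pose proof (proj1 typ_inst_mut _ _ _ HM tau Hok) as H.
  rewrite subst_tm_psubst, subst_ty_psubst,
    <- (psubst_tm_ext _ _ _ Hinst), <- (psubst_ty_ext _ _ _ Hinst).
  replace (map _ (remove_at G i B)) with (inst_base tau B); [exact H|].
  destruct (split_list B i) as (F & S0 & -> & <-); [lia|].
  destruct S0 as [|x S0]; [rewrite length_app in Hi; simpl in Hi; lia|].
  assert (Hkept : kept_base tau (F ++ x :: S0) = F ++ S0).
  { unfold tau. rewrite length_app. simpl. rewrite kept_base_app by (now rewrite repeat_length).
    simpl. rewrite !kept_base_all_None; auto; lia. }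
  unfold inst_base. rewrite remove_at_app, Hkept. apply map_ext. intro y.
  rewrite subst_ty_psubst. apply psubst_ty_ext, Hinst.
Qed.

(** * Reducibility *)

Variable dagger : G -> G.
Variable meas : tm -> nat -> nat -> nat -> R.

Local Notation eval := (eval G arity dagger meas).

(* The fuel [tsize s] is preserved by substitution, which the Pi clauses need.  Arguments
   need only have a type convertible to the domain: this makes reducibility invariant
   under conversion without well-formedness side conditions. *)
Fixpoint red_fuel (f : nat) (s : ty) (M : tm) : Prop :=
  match f with
  | 0 => False
  | S f =>
    match s with
    | TIdx => exists n, eval M 1%R (tNum n)
    | TPi a b => forall A a', typ [] A a' -> tyconv G a' a -> red_fuel f a A ->
                   red_fuel f (subst_ty 0 A b) (tApp M A)
    | _ => True
    end
  end.

Fixpoint valid_fuel (f : nat) (s : ty) : Prop :=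
  match f with
  | 0 => False
  | S f =>
    match s with
    | TCirc E => typ [] E TIdx /\ exists n, eval E 1%R (tNum n)
    | TPi a b => forall A a', typ [] A a' -> tyconv G a' a -> red_fuel f a A ->
                   valid_fuel f (subst_ty 0 A b)
    | _ => True
    end
  end.

Definition red (s : ty) (M : tm) : Prop := red_fuel (tsize G s) s M.

Definition valid (s : ty) : Prop := valid_fuel (tsize G s) s.

Lemma red_fuel_irrel f f' s M :
  tsize G s <= f -> tsize G s <= f' -> red_fuel f s M <-> red_fuel f' s M.
Proof.
  revert f' s M; induction f as [|f IH]; intros [|f'] s M Hf Hf';
    pose proof (tsize_pos s) as Hpos; try lia.
  destruct s as [| |E|a b]; simpl in *; try tauto.
  split; intros H A a' HA Hc HR;
    (apply (IH f'); [rewrite tsize_subst; lia .. |]);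
    (apply H with a'; [assumption .. |]);
    (apply (IH f'); [lia .. | assumption]).
Qed.

Lemma valid_fuel_irrel f f' s :
  tsize G s <= f -> tsize G s <= f' -> valid_fuel f s <-> valid_fuel f' s.
Proof.
  revert f' s; induction f as [|f IH]; intros [|f'] s Hf Hf';
    pose proof (tsize_pos s) as Hpos; try lia.
  destruct s as [| |E|a b]; simpl in *; try tauto.
  split; intros H A a' HA Hc HR;
    (apply (IH f'); [rewrite tsize_subst; lia .. |]);
    (apply H with a'; [assumption .. |]);
    (apply (red_fuel_irrel f f'); [lia .. | assumption]).
Qed.

Lemma red_fuel_red f s M : tsize G s <= f -> red_fuel f s M <-> red s M.
Proof. intro H. now apply red_fuel_irrel. Qed.

Lemma valid_fuel_valid f s : tsize G s <= f -> valid_fuel f s <-> valid s.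
Proof. intro H. now apply valid_fuel_irrel. Qed.

Lemma red_pi a b M : red (TPi a b) M <->
  forall A a', typ [] A a' -> tyconv G a' a -> red a A -> red (subst_ty 0 A b) (tApp M A).
Proof.
  unfold red at 1. simpl. split; intros H A a' HA Hc HR.
  - specialize (H A a' HA Hc).
    rewrite !red_fuel_red in H by (rewrite ?tsize_subst; lia). auto.
  - rewrite red_fuel_red by (rewrite ?tsize_subst; lia).
    rewrite red_fuel_red in HR by lia. eauto.
Qed.

Lemma valid_pi a b : valid (TPi a b) <->
  forall A a', typ [] A a' -> tyconv G a' a -> red a A -> valid (subst_ty 0 A b).
Proof.
  unfold valid at 1. simpl. split; intros H A a' HA Hc HR.
  - specialize (H A a' HA Hc).
    rewrite red_fuel_red, valid_fuel_valid in H by (rewrite ?tsize_subst; lia). auto.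
  - rewrite valid_fuel_valid by (rewrite ?tsize_subst; lia).
    rewrite red_fuel_red in HR by lia. eauto.
Qed.

Lemma red_conv s s' M : tyconv G s s' -> red s M -> red s' M.
Proof.
  remember (tsize G s) as f eqn:Hf. assert (Hle : tsize G s <= f) by lia. clear Hf.
  revert s s' M Hle. induction f as [|f IH]; intros s s' M Hle Hc HR;
    [pose proof (tsize_pos s); lia|].
  destruct s as [| |E|a b].
  1-3: apply tyconv_same_head in Hc; destruct s'; simpl in Hc; tauto.
  apply tyconv_pi_inv in Hc as (a2 & b2 & -> & Ha & Hb). simpl in Hle.
  rewrite red_pi in *. intros A a' HA Hc HRA.
  apply IH with (subst_ty 0 A b); [rewrite tsize_subst; lia | |].
  - rewrite !subst_ty_psubst. now apply tyconv_psubst.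
  - apply HR with a'; [assumption | eapply cvt_trans; [eassumption | now apply cvt_sym] |].
    apply IH with a2; [rewrite <- (tsize_conv _ _ Ha); lia | now apply cvt_sym | assumption].
Qed.

Lemma red_expand s X Y : (forall Ps a V, eval (apps G X Ps) a V -> eval (apps G Y Ps) a V) ->
  red s X -> red s Y.
Proof.
  remember (tsize G s) as f eqn:Hf. assert (Hle : tsize G s <= f) by lia. clear Hf.
  revert s X Y Hle. induction f as [|f IH]; intros s X Y Hle HXY HR;
    [pose proof (tsize_pos s); lia|].
  destruct s as [| |E|a b]; try exact I.
  - destruct HR as [n Hn]. exists n. exact (HXY [] _ _ Hn).
  - simpl in Hle. rewrite red_pi in *. intros A a' HA Hc HRA.
    apply IH with (tApp X A); [rewrite tsize_subst; lia | | eauto].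
    intros Ps. apply (HXY (A :: Ps)).
Qed.

Lemma red_not_idx s M : ~ ends_in_idx s -> red s M.
Proof.
  remember (tsize G s) as f eqn:Hf. assert (Hle : tsize G s <= f) by lia. clear Hf.
  revert s M Hle. induction f as [|f IH]; intros s M Hle Hs; [pose proof (tsize_pos s); lia|].
  destruct s as [| |E|a b]; simpl in Hs; try tauto; try exact I.
  simpl in Hle. rewrite red_pi. intros. apply IH; [rewrite tsize_subst; lia|].
  now rewrite subst_ty_psubst, ends_in_idx_psubst.
Qed.

Lemma valid_arrow a b : valid b -> valid (arrow a b).
Proof. intro H. unfold arrow. rewrite valid_pi. intros. now rewrite subst_lift_ty. Qed.

Definition close_ty (sg : list tm) : ty -> ty := psubst_ty (inst (map Some sg)).

Definition close_tm (sg : list tm) : tm -> tm := psubst_tm (inst (map Some sg)).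

Definition env (B : list ty) (sg : list tm) : Prop :=
  inst_ok (map Some sg) B /\
  forall i N, nth_error sg i = Some N -> red (close_ty sg (nth i B TNat)) N.

Lemma inst_base_all_Some (sg : list tm) B : inst_base (map Some sg) B = [].
Proof.
  unfold inst_base. enough (kept_base (map Some sg) B = []) as -> by reflexivity.
  revert B; induction sg; intros [|x B]; simpl; auto.
Qed.

Lemma typ_close B sg M s : env B sg -> typ B M s -> typ [] (close_tm sg M) (close_ty sg s).
Proof.
  intros [Hok _] H. rewrite <- (inst_base_all_Some sg B). now apply typ_inst_mut.
Qed.

Lemma inst_all_Some sg i N : nth_error sg i = Some N -> inst (map Some sg) i = N.
Proof.
  revert i; induction sg as [|M sg IH]; intros [|i] H; simpl in *; try discriminate.
  - now injection H.
  - auto.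
Qed.

Lemma close_ty_lift sg1 N sg2 x :
  close_ty (sg1 ++ N :: sg2) (lift_ty 1 (length sg1) x) = close_ty (sg1 ++ sg2) x.
Proof.
  unfold close_ty. rewrite !map_app. simpl.
  rewrite <- (length_map Some sg1). apply psubst_ty_inst_lift_Some.
Qed.

Lemma close_ty_cons_lift A sg x : close_ty (A :: sg) (lift_ty 1 0 x) = close_ty sg x.
Proof. exact (close_ty_lift [] A sg x). Qed.

Lemma subst0_up_inst A tau k : closed_tm 0 A ->
  subst_tm 0 A (up (inst tau) k) = inst (Some A :: tau) k.
Proof.
  intro HA. destruct k as [|k]; simpl.
  - now rewrite lift0_tm.
  - apply subst_lift_tm.
Qed.

Lemma subst0_close_tm A sg X : closed_tm 0 A ->
  subst_tm 0 A (psubst_tm (up (inst (map Some sg))) X) = close_tm (A :: sg) X.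
Proof.
  intro HA. unfold close_tm. rewrite subst_tm_psubst, psubst_tm_comp. apply psubst_tm_ext.
  intro k. rewrite <- subst_tm_psubst. now apply subst0_up_inst.
Qed.

Lemma subst0_close_ty A sg X : closed_tm 0 A ->
  subst_ty 0 A (psubst_ty (up (inst (map Some sg))) X) = close_ty (A :: sg) X.
Proof.
  intro HA. unfold close_ty. rewrite subst_ty_psubst, psubst_ty_comp. apply psubst_ty_ext.
  intro k. rewrite <- subst_tm_psubst. now apply subst0_up_inst.
Qed.

Lemma env_ext B sg s A a : env B sg -> typ [] A a -> tyconv G a (close_ty sg s) ->
  red (close_ty sg s) A -> env (ext G B s) (A :: sg).
Proof.
  intros [Hok Hred] HA Hc HR. split; [now apply inst_ok_cons_Some with a|].
  rewrite ext_cons. intros [|i] N Hi; simpl in Hi; cbn [nth].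
  - injection Hi as <-. now rewrite close_ty_cons_lift.
  - rewrite nth_map_lift, close_ty_cons_lift. auto.
Qed.

Lemma env_remove i u B sg : i <= length B -> env (ins G i u B) sg ->
  exists sg1 N sg2, sg = sg1 ++ N :: sg2 /\ length sg1 = i /\ env B (sg1 ++ sg2).
Proof.
  intros Hi [Hok Hred]. pose proof (proj1 Hok) as Hl. rewrite length_map, length_ins in Hl.
  destruct (split_list B i Hi) as (F & S0 & -> & <-).
  destruct (split_list sg (length F)) as (sg1 & [|N sg2] & -> & Hsg1); [lia| |];
    rewrite length_app in Hl; simpl in Hl; [lia|].
  exists sg1, N, sg2. split; [reflexivity|]. split; [assumption|]. split.
  - rewrite map_app in *. apply (inst_ok_remove _ (Some N) _ u); [now rewrite length_map|].
    exact Hok.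
  - intros j M Hj. rewrite <- (nth_error_insert_bump _ _ N), Hsg1 in Hj.
    specialize (Hred _ _ Hj). rewrite ins_app, nth_map_lift, nth_insert_bump, <- Hsg1 in Hred.
    now rewrite close_ty_lift in Hred.
Qed.

Definition sem_typ (B : list ty) (M : tm) (s : ty) : Prop :=
  forall sg, env B sg -> red (close_ty sg s) (close_tm sg M) /\ valid (close_ty sg s).

Definition sem_wf (B : list ty) (s : ty) : Prop :=
  forall sg, env B sg -> valid (close_ty sg s).

Lemma close_ty_arrow sg a b : close_ty sg (arrow a b) = arrow (close_ty sg a) (close_ty sg b).
Proof. apply psubst_arrow. Qed.

Lemma close_tm_cons_lift A sg x : close_tm (A :: sg) (lift_tm 1 0 x) = close_tm sg x.
Proof. exact (psubst_tm_inst_lift_Some [] (map Some sg) A x). Qed.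

Lemma nth_ins_at i u B : i <= length B -> nth i (ins G i u B) TNat = lift_ty 1 i u.
Proof.
  intro Hi. destruct (split_list B i Hi) as (F & S0 & -> & <-).
  rewrite ins_app, nth_map_lift, nth_middle. reflexivity.
Qed.

Lemma typ_num_closed n : typ [] (tNum n) TIdx.
Proof. apply T_num. intros t []. Qed.

Lemma sem_var B i s : i <= length B -> sem_wf B s -> sem_typ (ins G i s B) (tVar i) (lift_ty 1 i s).
Proof.
  intros Hi Hs sg Henv.
  destruct (env_remove i s B sg Hi Henv) as (sg1 & N & sg2 & -> & <- & Henv').
  assert (HN : nth_error (sg1 ++ N :: sg2) (length sg1) = Some N)
    by (rewrite nth_error_app2, Nat.sub_diag by lia; reflexivity).
  split.
  - unfold close_tm. simpl. rewrite (inst_all_Some _ _ _ HN).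
    rewrite <- nth_ins_at with (B := B) by assumption. now apply Henv.
  - rewrite close_ty_lift. auto.
Qed.

Lemma sem_lam B s N t : sem_typ (ext G B s) N t -> sem_typ B (tLam s N) (TPi s t).
Proof.
  intros HN sg Henv. unfold close_ty, close_tm. cbn [psubst_tm psubst_ty]. split.
  - apply red_pi. intros A a HA Hc HR.
    assert (HAc : closed_tm 0 A) by now apply typ_nil_closed in HA.
    rewrite subst0_close_ty by assumption.
    destruct (HN (A :: sg)) as [Hred _]; [eapply env_ext; eauto|].
    eapply red_expand; [|exact Hred].
    intros Ps a' V Hev. apply E_beta. now rewrite subst0_close_tm.
  - apply valid_pi. intros A a HA Hc HR.
    assert (HAc : closed_tm 0 A) by now apply typ_nil_closed in HA.
    rewrite subst0_close_ty by assumption.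
    apply HN. eapply env_ext; eauto.
Qed.

Lemma sem_app B P Q s t : sem_typ B P (TPi s t) -> sem_typ B Q s -> typ B Q s ->
  sem_typ B (tApp P Q) (subst_ty 0 Q t).
Proof.
  intros HP HQ HtQ sg Henv.
  destruct (HP sg Henv) as [RP VP], (HQ sg Henv) as [RQ _].
  pose proof (typ_close _ _ _ _ Henv HtQ) as TQ.
  unfold close_ty, close_tm in *. cbn [psubst_tm psubst_ty] in *. rewrite psubst_ty_subst0.
  rewrite red_pi in RP. rewrite valid_pi in VP.
  split; [apply RP with (psubst_ty (inst (map Some sg)) s) |
          apply VP with (psubst_ty (inst (map Some sg)) s)]; auto using cvt_refl.
Qed.

Lemma sem_not_idx B M s : sem_wf B s -> ~ ends_in_idx s -> sem_typ B M s.
Proof.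
  intros Hs Hn sg Henv. split; auto. apply red_not_idx. unfold close_ty.
  now rewrite ends_in_idx_psubst.
Qed.

Lemma sem_wf_arrow B a b : sem_wf B b -> sem_wf B (arrow a b).
Proof. intros H sg Henv. rewrite close_ty_arrow. auto using valid_arrow. Qed.

Lemma sem_wf_nat B : sem_wf B TNat.
Proof. intros sg _. exact I. Qed.

Lemma sem_wf_circ B E : typ B E TIdx -> sem_typ B E TIdx -> sem_wf B (TCirc E).
Proof.
  intros HE HsE sg Henv. split; [exact (typ_close _ _ _ _ Henv HE) | apply (HsE sg Henv)].
Qed.

Lemma sem_wf_pi B s t : sem_wf B s -> sem_wf (ext G B s) t -> sem_wf B (TPi s t).
Proof.
  intros Hs Ht sg Henv. unfold close_ty. cbn [psubst_ty]. apply valid_pi. intros A a HA Hc HR.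
  rewrite subst0_close_ty by now apply typ_nil_closed in HA.
  apply Ht. eapply env_ext; eauto.
Qed.

Lemma sem_conv B M s t : sem_typ B M s -> tyconv G s t -> sem_wf B t -> sem_typ B M t.
Proof.
  intros HM Hc Ht sg Henv. split; auto. apply red_conv with (close_ty sg s).
  - now apply tyconv_psubst.
  - apply HM, Henv.
Qed.

Lemma sem_idx B E : sem_typ B E TIdx <->
  forall sg, env B sg -> exists n, eval (close_tm sg E) 1%R (tNum n).
Proof. split; intros H sg Henv; [apply H, Henv | split; [apply H, Henv | exact I]]. Qed.

Lemma sem_nat B M : sem_typ B M TNat.
Proof. intros sg _. split; exact I. Qed.

Lemma sem_arrow_const B M a b : sem_wf B b -> ~ ends_in_idx b -> sem_typ B M (arrow a b).
Proof.
  intros Hb Hn. apply sem_not_idx; [now apply sem_wf_arrow | now rewrite ends_in_idx_arrow].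
Qed.

Lemma eval_plus E0 E1 m n : eval E0 1%R (tNum m) -> eval E1 1%R (tNum n) ->
  eval (tPlus E0 E1) 1%R (tNum (m + n)).
Proof. intros H0 H1. rewrite <- (Rmult_1_l 1). now apply E_plus. Qed.

Lemma eval_mult E0 E1 m n : eval E0 1%R (tNum m) -> eval E1 1%R (tNum n) ->
  eval (tMult E0 E1) 1%R (tNum (m * n)).
Proof. intros H0 H1. rewrite <- (Rmult_1_l 1). now apply E_mult. Qed.

Lemma sem_num B n : sem_typ B (tNum n) TIdx.
Proof. apply sem_idx. intros sg _. exists n. apply E_num. Qed.

Lemma sem_plus B a b : sem_typ B a TIdx -> sem_typ B b TIdx -> sem_typ B (tPlus a b) TIdx.
Proof.
  rewrite !sem_idx. intros Ha Hb sg Henv.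
  destruct (Ha sg Henv) as [m Hm], (Hb sg Henv) as [n Hn]. exists (m + n). now apply eval_plus.
Qed.

Lemma sem_mult B a b : sem_typ B a TIdx -> sem_typ B b TIdx -> sem_typ B (tMult a b) TIdx.
Proof.
  rewrite !sem_idx. intros Ha Hb sg Henv.
  destruct (Ha sg Henv) as [m Hm], (Hb sg Henv) as [n Hn]. exists (m * n). now apply eval_mult.
Qed.

Lemma sem_size B M E : typ B M (TCirc E) -> sem_typ B M (TCirc E) -> sem_typ B (tApp tSize M) TIdx.
Proof.
  intros HM HsM. apply sem_idx. intros sg Henv.
  destruct (HsM sg Henv) as [_ [_ [n Hn]]]. exists n.
  eapply E_size; [exact (typ_close _ _ _ _ Henv HM) | exact Hn].
Qed.

Lemma sem_wf_par B E0 E1 :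
  typ B E0 TIdx -> sem_typ B E0 TIdx -> typ B E1 TIdx -> sem_typ B E1 TIdx ->
  sem_wf B (TCirc (tPlus (tPlus E0 E1) (tNum 1))).
Proof.
  intros H0 Hs0 H1 Hs1 sg Henv.
  destruct (sem_wf_circ _ _ H0 Hs0 sg Henv) as [T0 [n0 N0]],
           (sem_wf_circ _ _ H1 Hs1 sg Henv) as [T1 [n1 N1]].
  split.
  - repeat apply T_plus; auto using typ_num_closed.
  - exists (n0 + n1 + 1). repeat apply eval_plus; auto using E_num.
Qed.

Lemma sem_wf_iter B E0 E1 :
  typ B E0 TIdx -> sem_typ B E0 TIdx -> typ B E1 TIdx -> sem_typ B E1 TIdx ->
  sem_wf B (TPi TIdx (arrow (TCirc (lift_tm 1 0 E0)) (arrow (TCirc (lift_tm 1 0 E1))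
     (TCirc (tPlus (lift_tm 1 0 E0) (tMult (tPlus (tNum 1) (lift_tm 1 0 E1)) (tVar 0))))))).
Proof.
  intros H0 Hs0 H1 Hs1 sg Henv.
  destruct (sem_wf_circ _ _ H0 Hs0 sg Henv) as [T0 [n0 N0]],
           (sem_wf_circ _ _ H1 Hs1 sg Henv) as [T1 [n1 N1]].
  unfold close_ty. cbn [psubst_ty]. apply valid_pi. intros A a HA Hc [k Hk].
  apply tyconv_idx_inv in Hc as ->.
  rewrite subst0_close_ty by now apply typ_nil_closed in HA.
  rewrite !close_ty_arrow. repeat apply valid_arrow.
  unfold close_ty. cbn [psubst_tm psubst_ty]. fold (close_tm (A :: sg)).
  rewrite !close_tm_cons_lift.
  split.
  - repeat (apply T_plus || apply T_mult); auto using typ_num_closed.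
  - eexists. apply eval_plus; [eassumption|]. apply eval_mult; [|eassumption].
    apply eval_plus; [apply E_num | eassumption].
Qed.

Lemma sem_sound_mut :
  (forall B M s, typ B M s -> sem_typ B M s) /\ (forall B s, wf B s -> sem_wf B s).
Proof.
  apply typ_wf_mutind; intros;
    try solve [apply sem_arrow_const; [repeat apply sem_wf_arrow; apply sem_wf_nat |
                                       rewrite ?ends_in_idx_arrow; simpl; tauto]].
  - now apply sem_var.
  - now apply sem_lam.
  - now apply sem_app with s.
  - apply sem_num.
  - apply sem_not_idx; [apply sem_wf_circ; auto using T_num, sem_num | simpl; tauto].
  - apply sem_arrow_const; [repeat apply sem_wf_arrow; now apply sem_wf_circ |
                            rewrite !ends_in_idx_arrow; simpl; tauto].
  - apply sem_arrow_const; [assumption|].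
    intro Hs. apply (ends_in_idx_conv _ _ ltac:(eassumption)) in Hs. revert Hs.
    now apply yshape_not_idx.
  - apply sem_nat.
  - now apply sem_plus.
  - now apply sem_mult.
  - now apply sem_size with E.
  - apply sem_arrow_const; [repeat apply sem_wf_arrow; now apply sem_wf_circ |
                            rewrite !ends_in_idx_arrow; simpl; tauto].
  - apply sem_arrow_const; [apply sem_wf_arrow; now apply sem_wf_par |
                            rewrite !ends_in_idx_arrow; simpl; tauto].
  - apply sem_arrow_const; [now apply sem_wf_circ | simpl; tauto].
  - apply sem_not_idx; [now apply sem_wf_iter |
                        cbn [ends_in_idx]; rewrite !ends_in_idx_arrow; simpl; tauto].
  - now apply sem_conv with s.
  - apply sem_wf_nat.
  - intros sg _. exact I.
  - now apply sem_wf_circ.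
  - now apply sem_wf_pi.
Qed.

Lemma env_nil : env [] [].
Proof.
  split; [split; [reflexivity | intros [|i] N H; discriminate] | intros [|i] N H; discriminate].
Qed.

Lemma red_valid_of_typ M s : typ [] M s -> red s M /\ valid s.
Proof.
  intro H. pose proof (proj1 sem_sound_mut _ _ _ H [] env_nil) as Hs.
  unfold close_ty, close_tm in Hs. simpl in Hs. now rewrite psubst_ty_id, psubst_tm_id in Hs.
Qed.

Lemma compc_of_typ f s M : tsize G s <= f -> typ [] M s -> compc G arity dagger meas f s M.
Proof.
  revert s M; induction f as [|f IH]; intros s M Hf HM; [pose proof (tsize_pos s); lia|].
  split; [assumption|]. destruct s as [| |E|a b].
  - exact I.
  - apply (red_valid_of_typ M TIdx HM).
  - destruct f as [|f]; simpl in Hf; [lia|]. exact (proj2 (red_valid_of_typ _ _ HM)).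
  - intros N HN. destruct f as [|f]; [destruct HN|]. destruct HN as [HN _].
    apply IH; [simpl in Hf; rewrite tsize_subst; lia | eapply T_app; eauto].
Qed.

Lemma comp_aux_of_typ n B M s : length B = n -> typ B M s -> comp_aux G arity dagger meas n B M s.
Proof.
  revert B M s; induction n as [|n IH]; intros B M s Hl HM; simpl.
  - destruct B; [|discriminate]. split; [reflexivity|]. now apply compc_of_typ.
  - split; [assumption|]. intros i Hi N HN.
    unfold CompClosed in HN. destruct (tsize G (nth i B TNat)); [destruct HN|].
    apply IH; [|apply typ_subst; [exact HM | exact Hi | exact (proj1 HN)]].
    rewrite length_map. unfold remove_at. rewrite length_app, length_firstn, length_skipn. lia.
Qed.

End Qpcf.

Theorem theorem1 :
  forall (G : Type) (arity : G -> nat) (dagger : G -> G),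
    (forall g, arity (dagger g) = arity g) ->
  forall (meas : tm G -> nat -> nat -> nat -> R)
         (B : list (ty G)) (M : tm G) (kappa : ty G),
    typ G arity B M kappa -> Comp G arity dagger meas B M kappa.
Proof.
  intros G arity dagger _ meas B M kappa H. now apply comp_aux_of_typ.
Qed.
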